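(* Let $\Gamma$ be a regular $N\times 2$ potential game with potential $u$. Then the set $\mathrm{NE}$ of Nash equilibria of $\Gamma$ is finite. Moreover, there exists $\lambda_0>0$ and, for each $x^*\in\mathrm{NE}$, a continuous function $\lambda\mapsto x^{\lambda}(x^* )$ from $(0,\lambda_0)$ into $\Delta=[0,1]^N$ with the following properties. For every $\lambda\in(0,\lambda_0)$, the points $x^{\lambda}(x^* )$, $x^*\in\mathrm{NE}$, are pairwise distinct and $\mathrm{ND}(\lambda)=\{x^{\lambda}(x^* ):x^*\in\mathrm{NE}\}$. For every $x^*\in\mathrm{NE}$, $x^{\lambda}(x^* )\to x^*$ as $\lambda\to 0$. In particular, $\mathrm{ND}(\lambda)$ is finite and in one-to-one correspondence with $\mathrm{NE}$ for every $\lambda\in(0,\lambda_0)$.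
   Context: An $N\times 2$ game has players $i=1,\dots,N$, each with action set $A_i=\{a_i^1,a_i^2\}$, and utilities $u_i:A_1\times\cdots\times A_N\to\mathbb{R}$. It is a potential game with potential $u:A_1\times\cdots\times A_N\to\mathbb{R}$ if $u(a_i,a_{-i})-u(a_i',a_{-i})=u_i(a_i,a_{-i})-u_i(a_i',a_{-i})$ for all $i$, all $a_i,a_i'\in A_i$ and all $a_{-i}$. A mixed strategy of player $i$ is a number $x_i\in[0,1]$, the probability of playing $a_i^1$. Joint mixed strategies form $\Delta=[0,1]^N$. The multilinear extension of the potential is $$U(x)=\sum_{k_1,\dots,k_N\in\{1,2\}} z_1^{k_1}(x_1)\cdots z_N^{k_N}(x_N)\,u(a_1^{k_1},\dots,a_N^{k_N}),$$ where $z_i^1(x_i)=x_i$ and $z_i^2(x_i)=1-x_i$. We write $U(a_i^k,x_{-i})$ for the value of $U$ when player $i$ plays $a_i^k$ with probability 1 and the others play $x_{-i}$. The set of Nash equilibria is $\mathrm{NE}=\{x\in\Delta: U(x_i,x_{-i})\ge U(x_i',x_{-i})\ \text{for all } i \text{ and all } x_i'\in[0,1]\}$. For $\lambda>0$, the logit (smoothed) best response is $$\widehat{BR}^\lambda_i(x)=\frac{\exp(U(a_i^1,x_{-i})/\lambda)}{\sum_{k=1,2}\exp(U(a_i^k,x_{-i})/\lambda)},\qquad \widehat{BR}^\lambda(x)=(\widehat{BR}^\lambda_1(x),\dots,\widehat{BR}^\lambda_N(x)).$$ The set of Nash distributions is $\mathrm{ND}(\lambda)=\{x\in\Delta: x=\widehat{BR}^\lambda(x)\}$.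 Regularity. Let $x^*\in\mathrm{NE}$, and relabel each player's two actions so that $x_i^*>0$ for all $i$; thus each player either mixes ($0<x_i^*<1$) or plays $a_i^1$ purely ($x_i^*=1$). - $x^*$ is quasi-strict if, for every $i$ with $x_i^*=1$, the action $a_i^2$ is not a best response to $x_{-i}^*$, i.e. $U(a_i^1,x^*_{-i})>U(a_i^2,x^*_{-i})$. - Let the mixing players be $i=1,\dots,\tilde N$ after reordering. The restricted Hessian relative to $x^*$ is the $\tilde N\times\tilde N$ matrix $H(x)=\big(\partial^2 U(x)/\partial x_i\partial x_j\big)_{i,j=1,\dots,\tilde N}$, which may be evaluated at any $x\in\Delta$. - $x^*$ is regular if it is quasi-strict and $H(x^* )$ is invertible. - The potential game is regular if every Nash equilibrium is regular. *)

From Stdlib Require Import Reals Lra List.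
Open Scope R_scope.

(* Players are 0..N-1; a pure action of player i is a bool:
   true = a_i^1, false = a_i^2.  A pure profile is a list bool of length N.
   A mixed profile is x : nat -> R, x i = prob. of a_i^1 (coordinates >= N are 0). *)

Fixpoint upd (l : list bool) (i : nat) (b : bool) : list bool :=
  match l, i with
  | nil, _ => nil
  | _ :: t, O => b :: t
  | h :: t, S k => h :: upd t k b
  end.

Definition is_potential (N : nat) (ui : nat -> list bool -> R) (u : list bool -> R) : Prop :=
  forall i : nat, (i < N)%nat -> forall a : list bool, length a = N ->
  forall b b' : bool,
    u (upd a i b) - u (upd a i b') = ui i (upd a i b) - ui i (upd a i b').

(* multilinear extension: mle i n f x = sum over pure choices of positions i..i+n-1 *)
Fixpoint mle (i n : nat) (f : list bool -> R) (x : nat -> R) : R :=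
  match n with
  | O => f nil
  | S m => x i * mle (S i) m (fun l => f (true :: l)) x
           + (1 - x i) * mle (S i) m (fun l => f (false :: l)) x
  end.

Definition U (N : nat) (u : list bool -> R) (x : nat -> R) : R := mle 0 N u x.

Definition xupd (x : nat -> R) (i : nat) (v : R) : nat -> R :=
  fun j => if Nat.eqb j i then v else x j.

Definition Delta_set (N : nat) (x : nat -> R) : Prop :=
  forall i : nat, ((i < N)%nat -> 0 <= x i <= 1) /\ ((N <= i)%nat -> x i = 0).

Definition NE (N : nat) (u : list bool -> R) (x : nat -> R) : Prop :=
  Delta_set N x /\
  forall i : nat, (i < N)%nat -> forall y : R, 0 <= y <= 1 ->
    U N u (xupd x i y) <= U N u x.

Definition BR (N : nat) (u : list bool -> R) (lam : R) (x : nat -> R) (i : nat) : R :=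
  exp (U N u (xupd x i 1) / lam) /
  (exp (U N u (xupd x i 1) / lam) + exp (U N u (xupd x i 0) / lam)).

Definition ND (N : nat) (u : list bool -> R) (lam : R) (x : nat -> R) : Prop :=
  Delta_set N x /\ forall i : nat, (i < N)%nat -> x i = BR N u lam x i.

(* h is the second partial derivative d^2 U / dx_i dx_j at x
   (first differentiate in x_i, then in x_j) *)
Definition is_hess (N : nat) (u : list bool -> R) (x : nat -> R) (i j : nat) (h : R) : Prop :=
  exists g : R -> R,
    (forall t : R, derivable_pt_lim (fun s => U N u (xupd (xupd x j t) i s))
                                    (xupd x j t i) (g t)) /\
    derivable_pt_lim g (x j) h.

Fixpoint sum_lt (n : nat) (f : nat -> R) : R :=
  match n with
  | O => 0
  | S m => sum_lt m f + f m
  end.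

Definition mixing (x : nat -> R) (i : nat) : Prop := 0 < x i < 1.

(* quasi-strictness, with the relabeling (so that x_i* > 0) unfolded:
   pure players' unused action is not a best response *)
Definition quasi_strict (N : nat) (u : list bool -> R) (x : nat -> R) : Prop :=
  forall i : nat, (i < N)%nat ->
    (x i = 1 -> U N u (xupd x i 1) > U N u (xupd x i 0)) /\
    (x i = 0 -> U N u (xupd x i 0) > U N u (xupd x i 1)).

(* the restricted Hessian (indices = mixing players) at x is invertible:
   it exists and has a two-sided inverse matrix *)
Definition restricted_hessian_invertible (N : nat) (u : list bool -> R) (x : nat -> R) : Prop :=
  exists H G : nat -> nat -> R,
    (forall i j, (i < N)%nat -> (j < N)%nat -> mixing x i -> mixing x j ->
        is_hess N u x i j (H i j)) /\
    (forall i j, (i < N)%nat -> (j < N)%nat -> mixing x i -> mixing x j ->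
        sum_lt N (fun k => if Rlt_dec 0 (x k) then if Rlt_dec (x k) 1
                           then H i k * G k j else 0 else 0)
        = if Nat.eqb i j then 1 else 0) /\
    (forall i j, (i < N)%nat -> (j < N)%nat -> mixing x i -> mixing x j ->
        sum_lt N (fun k => if Rlt_dec 0 (x k) then if Rlt_dec (x k) 1
                           then G i k * H k j else 0 else 0)
        = if Nat.eqb i j then 1 else 0).

Definition regular_NE (N : nat) (u : list bool -> R) (x : nat -> R) : Prop :=
  quasi_strict N u x /\ restricted_hessian_invertible N u x.

Definition regular_game (N : nat) (u : list bool -> R) : Prop :=
  forall x, NE N u x -> regular_NE N u x.

(* Around a regular equilibrium y, the Nash distributions at temperature l are the fixed points of a
   map [local_map l] that, for small l, contracts a box around y for a weighted sup-norm.  On the mixing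
   coordinates it is a Newton step, built from the inverse of the restricted Hessian, for the equations
   dU/dx_i (x) = l * logit (x_i); on the pure coordinates it is the logit response itself, which is
   nearly constant because quasi-strictness keeps the payoff gap of a pure player away from 0.  Its
   fixed point x^l(y) is unique in the box, Lipschitz in l, and tends to y.  A point of Delta that is
   not an equilibrium has a player with a strictly profitable deviation, hence a neighbourhood without
   equilibria and, for small l, without Nash distributions.  Compactness of Delta gives finitely many
   such neighbourhoods covering it, so NE is finite and l can be chosen uniformly. *)

From Stdlib Require Import Reals List Lra Lia Psatz FunctionalExtensionality ClassicalEpsilon Classical.
Open Scope R_scope.

Lemma xupd_eq x i v : xupd x i v i = v.
Proof. unfold xupd. now rewrite Nat.eqb_refl. Qed.

Lemma xupd_neq x i j v : j <> i -> xupd x i v j = x j.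
Proof. intro H. unfold xupd. apply Nat.eqb_neq in H. now rewrite H. Qed.

Lemma xupd_xupd x i a b : xupd (xupd x i a) i b = xupd x i b.
Proof.
  apply functional_extensionality; intro j. unfold xupd.
  destruct (Nat.eqb j i); auto.
Qed.

Lemma xupd_comm x i j a b : i <> j -> xupd (xupd x i a) j b = xupd (xupd x j b) i a.
Proof.
  intro H. apply functional_extensionality; intro k. unfold xupd.
  destruct (Nat.eqb_spec k j); destruct (Nat.eqb_spec k i); subst; auto. lia.
Qed.

Lemma xupd_id x i : xupd x i (x i) = x.
Proof.
  apply functional_extensionality; intro j. unfold xupd.
  destruct (Nat.eqb_spec j i); subst; auto.
Qed.

Lemma sum_lt_ext n f g : (forall k, (k < n)%nat -> f k = g k) -> sum_lt n f = sum_lt n g.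
Proof.
  induction n; simpl; intros; auto.
  rewrite IHn by (intros; apply H; lia). rewrite H by lia. auto.
Qed.

Lemma sum_lt_add n f g : sum_lt n (fun k => f k + g k) = sum_lt n f + sum_lt n g.
Proof. induction n; simpl. lra. rewrite IHn; lra. Qed.

Lemma sum_lt_sub n f g : sum_lt n (fun k => f k - g k) = sum_lt n f - sum_lt n g.
Proof. induction n; simpl. lra. rewrite IHn; lra. Qed.

Lemma sum_lt_scal n c f : sum_lt n (fun k => c * f k) = c * sum_lt n f.
Proof. induction n; simpl. lra. rewrite IHn; lra. Qed.

Lemma sum_lt_zero n f : (forall k, (k < n)%nat -> f k = 0) -> sum_lt n f = 0.
Proof.
  induction n; simpl; intros; auto.
  rewrite IHn by (intros; apply H; lia). rewrite H by lia. lra.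
Qed.

Lemma sum_lt_abs n f : Rabs (sum_lt n f) <= sum_lt n (fun k => Rabs (f k)).
Proof.
  induction n; simpl.
  - rewrite Rabs_R0; lra.
  - eapply Rle_trans. apply Rabs_triang. lra.
Qed.

Lemma sum_lt_le n f g : (forall k, (k < n)%nat -> f k <= g k) -> sum_lt n f <= sum_lt n g.
Proof.
  induction n; simpl; intros. lra.
  assert (sum_lt n f <= sum_lt n g) by (apply IHn; intros; apply H; lia).
  assert (f n <= g n) by (apply H; lia). lra.
Qed.

Lemma sum_lt_const n c : sum_lt n (fun _ => c) = INR n * c.
Proof. induction n; simpl sum_lt. simpl; lra. rewrite IHn, S_INR. lra. Qed.

Lemma sum_lt_abs_le n f c : (forall k, (k < n)%nat -> Rabs (f k) <= c) -> Rabs (sum_lt n f) <= INR n * c.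
Proof.
  intros H. eapply Rle_trans. apply sum_lt_abs.
  rewrite <- sum_lt_const. apply sum_lt_le; auto.
Qed.

Lemma sum_lt_comm n m f :
  sum_lt n (fun i => sum_lt m (fun j => f i j)) = sum_lt m (fun j => sum_lt n (fun i => f i j)).
Proof.
  induction n; simpl.
  - symmetry. apply sum_lt_zero. auto.
  - rewrite IHn, <- sum_lt_add. auto.
Qed.

Lemma sum_lt_comm_scal n m (a b : nat -> R) (E : nat -> nat -> R) :
  sum_lt n (fun k => a k * sum_lt m (fun j => b j * E k j)) =
  sum_lt m (fun j => b j * sum_lt n (fun k => a k * E k j)).
Proof.
  transitivity (sum_lt n (fun k => sum_lt m (fun j => a k * (b j * E k j)))).
  - apply sum_lt_ext; intros; rewrite <- sum_lt_scal; auto.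
  - rewrite sum_lt_comm. apply sum_lt_ext; intros. rewrite <- sum_lt_scal.
    apply sum_lt_ext; intros. ring.
Qed.

Lemma sum_lt_kronecker n i f : (i < n)%nat ->
  sum_lt n (fun j => (if Nat.eqb i j then 1 else 0) * f j) = f i.
Proof.
  induction n; simpl; intros. lia.
  destruct (Nat.eq_dec i n).
  - subst. rewrite Nat.eqb_refl, sum_lt_zero. lra.
    intros k Hk. destruct (Nat.eqb_spec n k); [lia | lra].
  - rewrite IHn by lia. destruct (Nat.eqb_spec i n). lia. lra.
Qed.

Lemma sum_lt_nonneg n f : (forall k, (k < n)%nat -> 0 <= f k) -> 0 <= sum_lt n f.
Proof.
  intros. replace 0 with (sum_lt n (fun _ => 0)) by (apply sum_lt_zero; auto).
  apply sum_lt_le; auto.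
Qed.

Lemma sum_lt_term_le n f k : (forall j, (j < n)%nat -> 0 <= f j) -> (k < n)%nat -> f k <= sum_lt n f.
Proof.
  induction n; simpl; intros. lia.
  assert (0 <= sum_lt n f) by (apply sum_lt_nonneg; intros; apply H; lia).
  destruct (Nat.eq_dec k n). subst. lra.
  assert (f k <= sum_lt n f) by (apply IHn; [intros; apply H; lia | lia]).
  assert (0 <= f n) by (apply H; lia). lra.
Qed.

Lemma exists_abs_bound n (f : nat -> R) : exists B, 0 <= B /\ forall k, (k < n)%nat -> Rabs (f k) <= B.
Proof.
  exists (sum_lt n (fun k => Rabs (f k))). split.
  - apply sum_lt_nonneg; intros; apply Rabs_pos.
  - intros. apply (sum_lt_term_le n (fun k => Rabs (f k))); auto. intros; apply Rabs_pos.
Qed.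

Lemma exists_abs_bound2 n (f : nat -> nat -> R) : exists B, 0 <= B /\
  forall k j, (k < n)%nat -> (j < n)%nat -> Rabs (f k j) <= B.
Proof.
  destruct (exists_abs_bound n (fun k => sum_lt n (fun j => Rabs (f k j)))) as [B [HB H]].
  exists B; split; auto. intros.
  eapply Rle_trans. 2: apply (H k H0).
  eapply Rle_trans. 2: apply Rle_abs.
  apply (sum_lt_term_le n (fun j => Rabs (f k j))); auto. intros; apply Rabs_pos.
Qed.

Lemma Rdiv_nonneg a b : 0 <= a -> 0 < b -> 0 <= a / b.
Proof. intros. unfold Rdiv. apply Rmult_le_pos; auto. apply Rlt_le, Rinv_0_lt_compat; auto. Qed.

Definition small_enough (P : R -> Prop) := exists e, 0 < e /\ forall t, 0 < t -> t <= e -> P t.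

Lemma small_enough_and P Q : small_enough P -> small_enough Q -> small_enough (fun t => P t /\ Q t).
Proof.
  intros [a [Ha HP]] [b [Hb HQ]]. exists (Rmin a b). split.
  - apply Rmin_glb_lt; auto.
  - intros t Ht Hle. pose proof (Rmin_l a b). pose proof (Rmin_r a b).
    split; [apply HP | apply HQ]; auto; lra.
Qed.

Lemma small_enough_impl (P Q : R -> Prop) : small_enough P -> (forall t, 0 < t -> P t -> Q t) -> small_enough Q.
Proof. intros [a [Ha HP]] H. exists a. split; auto. Qed.

Lemma small_enough_forall_lt n (P : nat -> R -> Prop) :
  (forall i, (i < n)%nat -> small_enough (P i)) -> small_enough (fun t => forall i, (i < n)%nat -> P i t).
Proof.
  induction n; intros H.
  - exists 1. split. lra. intros. lia.
  - assert (A : small_enough (fun t => forall i, (i < n)%nat -> P i t)) by (apply IHn; intros; apply H; lia).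
    destruct (small_enough_and _ _ A (H n ltac:(lia))) as [e [He HH]]. exists e. split; auto.
    intros t Ht Hte i Hi. destruct (HH t Ht Hte) as [H1 H2].
    destruct (Nat.eq_dec i n). subst; auto. apply H1. lia.
Qed.

Lemma small_enough_le c : 0 < c -> small_enough (fun t => t <= c).
Proof. intros. exists c. split; auto. Qed.

Lemma small_enough_witness P : small_enough P -> exists t, 0 < t /\ P t.
Proof. intros [e [He H]]. exists e. split; auto. apply H; lra. Qed.

Lemma small_enough_linear c b : 0 < b -> small_enough (fun t => c * t <= b).
Proof.
  intros Hb. pose proof (Rabs_pos c). exists (b / (Rabs c + 1)). split.
  - apply Rdiv_lt_0_compat; lra.
  - intros t Ht Hte.
    apply Rle_trans with ((Rabs c + 1) * t). pose proof (Rle_abs c); nra.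
    apply Rmult_le_reg_r with (/ (Rabs c + 1)). apply Rinv_0_lt_compat; lra.
    replace ((Rabs c + 1) * t * / (Rabs c + 1)) with t by (field; lra). exact Hte.
Qed.

(** * Functions affine in each coordinate *)

Definition affine_in_each n (F : (nat -> R) -> R) := forall x j t, (j < n)%nat ->
  F (xupd x j t) = F (xupd x j 0) + t * (F (xupd x j 1) - F (xupd x j 0)).

Definition depends_below n (F : (nat -> R) -> R) :=
  forall x x', (forall j, (j < n)%nat -> x j = x' j) -> F x = F x'.

Definition pdiff j (F : (nat -> R) -> R) z := F (xupd z j 1) - F (xupd z j 0).

Lemma mle_depends m : forall i f x x', (forall j, (i <= j < i + m)%nat -> x j = x' j) ->
  mle i m f x = mle i m f x'.
Proof.
  induction m; intros i f x x' H; simpl; auto.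
  rewrite (IHm (S i) _ x x'), (IHm (S i) (fun l => f (false :: l)) x x') by (intros; apply H; lia).
  rewrite (H i) by lia. auto.
Qed.

Lemma mle_affine m : forall i f x j t, (i <= j < i + m)%nat ->
  mle i m f (xupd x j t) =
  mle i m f (xupd x j 0) + t * (mle i m f (xupd x j 1) - mle i m f (xupd x j 0)).
Proof.
  induction m; intros i f x j t Hj. lia. simpl.
  destruct (Nat.eq_dec j i).
  - subst. rewrite !xupd_eq.
    assert (Hfree : forall b a, mle (S i) m (fun l => f (b :: l)) (xupd x i a) =
                                mle (S i) m (fun l => f (b :: l)) x).
    { intros b a. apply mle_depends. intros. rewrite xupd_neq by lia. auto. }
    rewrite !Hfree. ring.
  - rewrite !xupd_neq by auto.
    rewrite (IHm (S i) (fun l => f (true :: l)) x j t) by lia.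
    rewrite (IHm (S i) (fun l => f (false :: l)) x j t) by lia. ring.
Qed.

Lemma U_affine_in_each n u : affine_in_each n (U n u).
Proof. intros x j t Hj. apply mle_affine. lia. Qed.

Lemma U_depends_below n u : depends_below n (U n u).
Proof. intros x x' H. apply mle_depends. intros; apply H; lia. Qed.

Lemma affine_sub n F z j a b : affine_in_each n F -> (j < n)%nat ->
  F (xupd z j a) - F (xupd z j b) = (a - b) * pdiff j F z.
Proof. intros HA Hj. rewrite (HA z j a Hj), (HA z j b Hj). unfold pdiff. ring. Qed.

Lemma affine_expand n F z j : affine_in_each n F -> (j < n)%nat ->
  F z = F (xupd z j 0) + z j * pdiff j F z.
Proof.
  intros HA Hj. rewrite <- (xupd_id z j) at 1. rewrite (HA z j (z j) Hj).
  unfold pdiff. ring.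
Qed.

Lemma pdiff_affine_in_each n F k : affine_in_each n F -> affine_in_each n (pdiff k F).
Proof.
  intros HA x j t Hj. unfold pdiff.
  destruct (Nat.eq_dec j k).
  - subst. rewrite !xupd_xupd. ring.
  - rewrite !(xupd_comm _ j k) by auto.
    rewrite (HA (xupd x k 1) j t Hj), (HA (xupd x k 0) j t Hj). ring.
Qed.

Lemma pdiff_depends_below n F k : depends_below n F -> depends_below n (pdiff k F).
Proof.
  intros HD x x' H. unfold pdiff.
  f_equal; apply HD; intros j Hj; unfold xupd; destruct (Nat.eqb j k); auto.
Qed.

Definition splice (m : nat) (x x' : nat -> R) : nat -> R :=
  fun i => if Nat.ltb i m then x i else x' i.

Lemma splice_succ m x x' : splice (S m) x x' = xupd (splice m x x') m (x m).
Proof.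
  apply functional_extensionality; intro i. unfold splice, xupd.
  destruct (Nat.eqb_spec i m).
  - subst. replace (m <? S m)%nat with true; auto. symmetry. apply Nat.ltb_lt. lia.
  - destruct (Nat.ltb_spec i (S m)); destruct (Nat.ltb_spec i m); auto; lia.
Qed.

Lemma splice_at m x x' : splice m x x' = xupd (splice m x x') m (x' m).
Proof.
  apply functional_extensionality; intro i. unfold splice, xupd.
  destruct (Nat.eqb_spec i m); subst; [rewrite Nat.ltb_irrefl|]; auto.
Qed.

(* Exact mean value formula for functions affine in each coordinate: change one coordinate at a time. *)
Lemma affine_telescope n F x x' : affine_in_each n F -> depends_below n F ->
  F x - F x' = sum_lt n (fun j => (x j - x' j) * pdiff j F (splice j x x')).
Proof.
  intros HA HD.
  assert (Hm : forall m, (m <= n)%nat ->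
    F (splice m x x') - F x' = sum_lt m (fun j => (x j - x' j) * pdiff j F (splice j x x'))).
  { induction m; intros Hm; simpl.
    - replace (splice 0 x x') with x'. lra.
      apply functional_extensionality; intro i. reflexivity.
    - rewrite <- IHm by lia. rewrite splice_succ.
      pose proof (affine_sub n F (splice m x x') m (x m) (x' m) HA ltac:(lia)) as E.
      rewrite <- splice_at in E. lra. }
  rewrite <- (Hm n) by lia. f_equal. apply HD. intros j Hj. unfold splice.
  apply Nat.ltb_lt in Hj. rewrite Hj. auto.
Qed.

Definition near n (y x : nat -> R) d := forall j, (j < n)%nat -> Rabs (x j - y j) <= d.

Lemma near_refl n y d : 0 <= d -> near n y y d.
Proof. intros Hd j Hj. replace (y j - y j) with 0 by ring. rewrite Rabs_R0. auto. Qed.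

Lemma near_splice n y x x' r j : near n y x r -> near n y x' r -> near n y (splice j x x') r.
Proof. intros H1 H2 k Hk. unfold splice. destruct (Nat.ltb k j); auto. Qed.

Definition cont_at n (F : (nat -> R) -> R) y :=
  forall eps, 0 < eps -> small_enough (fun d => forall x, near n y x d -> Rabs (F x - F y) <= eps).

Lemma cont_at_const n c y : cont_at n (fun _ => c) y.
Proof.
  intros eps He. exists 1. split. lra. intros.
  replace (c - c) with 0 by ring. rewrite Rabs_R0. lra.
Qed.

Lemma cont_at_coord n j y : (j < n)%nat -> cont_at n (fun x => x j) y.
Proof. intros Hj eps He. exists eps. split; auto. intros t Ht Hte x Hx. specialize (Hx j Hj). lra. Qed.

Lemma cont_at_add n F G y : cont_at n F y -> cont_at n G y -> cont_at n (fun x => F x + G x) y.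
Proof.
  intros HF HG eps He.
  apply (small_enough_impl _ _ (small_enough_and _ _ (HF (eps/2) ltac:(lra)) (HG (eps/2) ltac:(lra)))).
  intros t Ht [H1 H2] x Hx. specialize (H1 x Hx). specialize (H2 x Hx).
  replace (F x + G x - (F y + G y)) with ((F x - F y) + (G x - G y)) by ring.
  eapply Rle_trans. apply Rabs_triang. lra.
Qed.

Lemma cont_at_opp n F y : cont_at n F y -> cont_at n (fun x => - F x) y.
Proof.
  intros HF eps He. apply (small_enough_impl _ _ (HF eps He)). intros t Ht H x Hx.
  replace (- F x - - F y) with (- (F x - F y)) by ring. rewrite Rabs_Ropp. auto.
Qed.

Lemma cont_at_sub n F G y : cont_at n F y -> cont_at n G y -> cont_at n (fun x => F x - G x) y.
Proof. intros. apply (cont_at_add n F (fun x => - G x)); auto. apply cont_at_opp; auto. Qed.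

Lemma cont_at_mul n F G y : cont_at n F y -> cont_at n G y -> cont_at n (fun x => F x * G x) y.
Proof.
  intros HF HG eps He.
  set (a := Rabs (F y)). set (b := Rabs (G y)).
  assert (Ha : 0 <= a) by apply Rabs_pos. assert (Hb : 0 <= b) by apply Rabs_pos.
  set (e1 := Rmin 1 (eps / (2 * (b + 1)))). set (e2 := eps / (2 * (a + 2))).
  assert (He1 : 0 < e1). { apply Rmin_glb_lt. lra. apply Rdiv_lt_0_compat; lra. }
  assert (He2 : 0 < e2) by (apply Rdiv_lt_0_compat; lra).
  apply (small_enough_impl _ _ (small_enough_and _ _ (HF e1 He1) (HG e2 He2))).
  intros t Ht [H1 H2] x Hx. specialize (H1 x Hx). specialize (H2 x Hx).
  replace (F x * G x - F y * G y) with ((F x - F y) * G y + F x * (G x - G y)) by ring.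
  eapply Rle_trans. apply Rabs_triang. rewrite !Rabs_mult.
  assert (e1 <= 1) by apply Rmin_l. assert (e1 <= eps / (2 * (b+1))) by apply Rmin_r.
  assert (Rabs (F x) <= a + 1).
  { replace (F x) with (F y + (F x - F y)) by ring. eapply Rle_trans. apply Rabs_triang. unfold a; lra. }
  assert (Rabs (F x - F y) * Rabs (G y) <= eps / 2).
  { apply Rle_trans with (eps / (2 * (b+1)) * (b + 1)).
    - apply Rmult_le_compat; try apply Rabs_pos; unfold b in *; lra.
    - apply Req_le. field. lra. }
  assert (Rabs (F x) * Rabs (G x - G y) <= eps / 2).
  { apply Rle_trans with ((a + 2) * e2).
    - apply Rmult_le_compat; try apply Rabs_pos; lra.
    - unfold e2. apply Req_le. field. lra. }
  lra.
Qed.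

Lemma cont_at_xupd n F k a y : cont_at n F (xupd y k a) -> cont_at n (fun x => F (xupd x k a)) y.
Proof.
  intros HF eps He. apply (small_enough_impl _ _ (HF eps He)). intros t Ht H x Hx.
  apply H. intros j Hj. unfold xupd. destruct (Nat.eqb j k); auto.
  replace (a - a) with 0 by ring. rewrite Rabs_R0.
  specialize (Hx j Hj). pose proof (Rabs_pos (x j - y j)). lra.
Qed.

Lemma mle_cont_at n m : forall i f y, (i + m <= n)%nat -> cont_at n (mle i m f) y.
Proof.
  induction m; intros i f y Hm; simpl.
  - apply cont_at_const.
  - apply cont_at_add; apply cont_at_mul.
    + apply cont_at_coord; lia.
    + apply IHm; lia.
    + apply cont_at_sub. apply cont_at_const. apply cont_at_coord; lia.
    + apply IHm; lia.
Qed.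

Lemma pdiff_cont_at n F k y : (forall z, cont_at n F z) -> cont_at n (pdiff k F) y.
Proof. intros HF. unfold pdiff. apply cont_at_sub; apply cont_at_xupd; apply HF. Qed.

(** * The logistic function *)

Lemma exp_le x y : x <= y -> exp x <= exp y.
Proof. intros [H|H]. apply Rlt_le, exp_increasing; auto. subst; lra. Qed.

Lemma exp_opp_mul t : exp t * exp (- t) = 1.
Proof. rewrite <- exp_plus. replace (t + - t) with 0 by ring. apply exp_0. Qed.

Definition logistic t := / (1 + exp (- t)).
Definition logit p := ln p - ln (1 - p).

Lemma logistic_range t : 0 < logistic t < 1.
Proof.
  unfold logistic. pose proof (exp_pos (-t)). split.
  - apply Rinv_0_lt_compat; lra.
  - rewrite <- Rinv_1. apply Rinv_lt_contravar; lra.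
Qed.

Lemma logistic_opp t : logistic (- t) = 1 - logistic t.
Proof.
  unfold logistic. rewrite Ropp_involutive. pose proof (exp_pos t).
  rewrite exp_Ropp. field. lra.
Qed.

Lemma exp_opp_sub_le t t' T : T <= t' -> t' <= t -> exp (- t') - exp (- t) <= exp (- T) * (t - t').
Proof.
  intros H1 H2.
  replace (exp (- t)) with (exp (- t') * exp (- (t - t'))) by (rewrite <- exp_plus; f_equal; ring).
  pose proof (exp_ineq1_le (- (t - t'))).
  assert (exp (- t') <= exp (- T)) by (apply exp_le; lra).
  pose proof (exp_pos (- t')). pose proof (exp_pos (- (t - t'))).
  apply Rle_trans with (exp (- t') * (t - t')). nra. apply Rmult_le_compat_r; lra.
Qed.

Lemma logistic_sub t t' :
  logistic t - logistic t' = (exp (- t') - exp (- t)) / ((1 + exp (- t)) * (1 + exp (- t'))).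
Proof. unfold logistic. pose proof (exp_pos (-t)). pose proof (exp_pos (-t')). field. lra. Qed.

Lemma logistic_lipschitz_above t t' T : T <= t -> T <= t' ->
  Rabs (logistic t - logistic t') <= exp (- T) * Rabs (t - t').
Proof.
  intros H1 H2. rewrite logistic_sub.
  pose proof (exp_pos (-t)). pose proof (exp_pos (-t')). pose proof (exp_pos (-T)).
  assert (HD : 1 <= (1 + exp (- t)) * (1 + exp (- t'))) by nra.
  unfold Rdiv. rewrite Rabs_mult, Rabs_inv, (Rabs_right ((1 + exp (- t)) * (1 + exp (- t')))) by lra.
  assert (Hi : 0 < / ((1 + exp (- t)) * (1 + exp (- t'))) <= 1).
  { split. apply Rinv_0_lt_compat; lra. rewrite <- Rinv_1. apply Rinv_le_contravar; lra. }
  assert (Rabs (exp (- t') - exp (- t)) <= exp (- T) * Rabs (t - t')).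
  { destruct (Rle_dec t' t).
    - assert (exp (- t) <= exp (- t')) by (apply exp_le; lra).
      rewrite Rabs_right, (Rabs_right (t - t')) by lra. apply exp_opp_sub_le; lra.
    - assert (exp (- t') <= exp (- t)) by (apply exp_le; lra).
      pose proof (exp_opp_sub_le t' t T).
      rewrite Rabs_left1, (Rabs_left1 (t - t')) by lra. lra. }
  pose proof (Rabs_pos (exp (- t') - exp (- t))). nra.
Qed.

Lemma logistic_lipschitz_ordered t t' : t' <= t -> Rabs (logistic t - logistic t') <= t - t'.
Proof.
  intros Htt. rewrite logistic_sub. pose proof (exp_pos (-t)). pose proof (exp_pos (-t')).
  pose proof (exp_opp_sub_le t t' t' ltac:(lra) Htt).
  assert (exp (- t) <= exp (- t')) by (apply exp_le; lra).
  rewrite Rabs_right by (apply Rle_ge, Rdiv_nonneg; nra).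
  apply Rle_trans with ((exp (- t') - exp (- t)) / (1 + exp (- t'))).
  { unfold Rdiv. apply Rmult_le_compat_l. lra. apply Rinv_le_contravar; nra. }
  apply Rle_trans with (exp (- t') * (t - t') / (1 + exp (- t'))).
  { unfold Rdiv. apply Rmult_le_compat_r. apply Rlt_le, Rinv_0_lt_compat; lra. lra. }
  apply Rmult_le_reg_r with (1 + exp (- t')). lra. field_simplify; nra.
Qed.

Lemma logistic_lipschitz t t' : Rabs (logistic t - logistic t') <= Rabs (t - t').
Proof.
  destruct (Rle_dec t' t).
  - rewrite (Rabs_right (t - t')) by lra. apply logistic_lipschitz_ordered; auto.
  - rewrite <- Rabs_Ropp, (Rabs_left1 (t - t')) by lra.
    replace (- (logistic t - logistic t')) with (logistic t' - logistic t) by ring.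
    replace (- (t - t')) with (t' - t) by ring. apply logistic_lipschitz_ordered. lra.
Qed.

Lemma logistic_temp_lipschitz a l l0 : 0 < l0 -> l0 / 2 <= l ->
  Rabs (logistic (a / l) - logistic (a / l0)) <= Rabs a * (2 / (l0 * l0)) * Rabs (l - l0).
Proof.
  intros Hl0 Hl. eapply Rle_trans. apply logistic_lipschitz.
  replace (a / l - a / l0) with (a * (l0 - l) / (l * l0)) by (field; lra).
  unfold Rdiv. rewrite !Rabs_mult, (Rabs_right (/ (l * l0))) by (apply Rle_ge, Rlt_le, Rinv_0_lt_compat; nra).
  replace (l0 - l) with (- (l - l0)) by ring. rewrite Rabs_Ropp.
  assert (/ (l * l0) <= 2 * / (l0 * l0)).
  { apply Rmult_le_reg_l with (l * l0). nra. rewrite Rinv_r by nra.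
    replace (l * l0 * (2 * / (l0 * l0))) with (2 * l / l0) by (field; lra).
    apply Rmult_le_reg_l with l0. lra. replace (l0 * (2 * l / l0)) with (2 * l) by (field; lra). lra. }
  pose proof (Rabs_pos a). pose proof (Rabs_pos (l - l0)).
  assert (0 <= / (l * l0)) by (apply Rlt_le, Rinv_0_lt_compat; nra).
  apply Rle_trans with (Rabs a * Rabs (l - l0) * (2 * / (l0 * l0))). apply Rmult_le_compat_l; nra.
  apply Req_le. ring.
Qed.

Lemma logistic_near_one t T : T <= t -> 0 < 1 - logistic t <= exp (- T).
Proof.
  intros H. rewrite <- logistic_opp. unfold logistic. rewrite Ropp_involutive.
  pose proof (exp_pos t). pose proof (exp_pos (- t)). pose proof (exp_opp_mul t).
  assert (exp (- t) <= exp (- T)) by (apply exp_le; lra).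
  split. apply Rinv_0_lt_compat; lra.
  apply Rle_trans with (exp (- t)); auto.
  apply Rmult_le_reg_r with (1 + exp t). lra. rewrite Rinv_l by lra. nra.
Qed.

Lemma exp_opp_div_le d l : 0 < d -> 0 < l -> exp (- (d / l)) <= l / d.
Proof.
  intros. pose proof (exp_ineq1_le (d / l)). pose proof (exp_opp_mul (d / l)).
  pose proof (exp_pos (- (d/l))).
  assert (0 < d / l) by (apply Rdiv_lt_0_compat; auto).
  apply Rle_trans with (/ (d / l)).
  - apply Rmult_le_reg_l with (d / l). auto. rewrite Rinv_r by lra. nra.
  - apply Req_le. field. lra.
Qed.

Lemma exp_opp_div_le_sq d l : 0 < d -> 0 < l -> exp (- (d / l)) / l <= 4 * l / (d * d).
Proof.
  intros. set (v := d / l). assert (0 < v) by (apply Rdiv_lt_0_compat; auto).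
  pose proof (exp_ineq1_le (v / 2)).
  assert (exp v = exp (v/2) * exp (v/2)) by (rewrite <- exp_plus; f_equal; field).
  pose proof (exp_opp_mul v). pose proof (exp_pos (-v)).
  assert (v * v / 4 <= exp v) by nra.
  assert (exp (- v) <= 4 / (v * v)).
  { apply Rmult_le_reg_l with (v * v / 4). nra. field_simplify; try lra. nra. }
  apply Rle_trans with (4 / (v * v) / l).
  - unfold Rdiv. apply Rmult_le_compat_r. apply Rlt_le, Rinv_0_lt_compat; auto. unfold Rdiv in *; lra.
  - unfold v. apply Req_le. field. lra.
Qed.

Lemma ln_le_sub1 x : 0 < x -> ln x <= x - 1.
Proof.
  intros. pose proof (exp_ineq1_le (x - 1)).
  destruct (Rle_dec (ln x) (x - 1)); auto. exfalso.
  assert (exp (x - 1) < exp (ln x)) by (apply exp_increasing; lra).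
  rewrite exp_ln in H1 by auto. lra.
Qed.

Lemma ln_lipschitz a b c : 0 < c -> c <= a -> c <= b -> Rabs (ln a - ln b) <= Rabs (a - b) / c.
Proof.
  intros.
  assert (Hone : forall p q, c <= p -> c <= q -> ln p - ln q <= Rabs (p - q) / c).
  { intros p q Hp Hq. replace (ln p - ln q) with (ln (p / q)).
    - apply Rle_trans with (p / q - 1). apply ln_le_sub1. apply Rdiv_lt_0_compat; lra.
      replace (p / q - 1) with ((p - q) / q) by (field; lra).
      destruct (Rle_dec q p).
      + rewrite Rabs_right by lra. unfold Rdiv. apply Rmult_le_compat_l. lra.
        apply Rinv_le_contravar; lra.
      + apply Rle_trans with 0. apply Rmult_le_reg_r with q. lra. field_simplify; lra.
        apply Rdiv_nonneg. apply Rabs_pos. lra.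
    - unfold Rdiv. rewrite ln_mult, ln_Rinv; try lra. apply Rinv_0_lt_compat; lra. }
  unfold Rabs at 1. destruct (Rcase_abs (ln a - ln b)).
  - rewrite <- Rabs_Ropp. replace (- (a - b)) with (b - a) by ring. pose proof (Hone b a H1 H0). lra.
  - apply Hone; auto.
Qed.

Lemma logit_lipschitz p p' c : 0 < c -> c <= p <= 1 - c -> c <= p' <= 1 - c ->
  Rabs (logit p - logit p') <= 2 / c * Rabs (p - p').
Proof.
  intros. unfold logit.
  replace (ln p - ln (1 - p) - (ln p' - ln (1 - p')))
    with ((ln p - ln p') - (ln (1 - p) - ln (1 - p'))) by ring.
  unfold Rminus at 1. eapply Rle_trans. apply Rabs_triang. rewrite Rabs_Ropp.
  pose proof (ln_lipschitz p p' c H ltac:(lra) ltac:(lra)).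
  pose proof (ln_lipschitz (1 - p) (1 - p') c H ltac:(lra) ltac:(lra)).
  replace (1 - p - (1 - p')) with (- (p - p')) in H3 by ring. rewrite Rabs_Ropp in H3.
  unfold Rdiv in *. lra.
Qed.

Lemma logit_logistic t : logit (logistic t) = t.
Proof.
  unfold logit. rewrite <- logistic_opp. unfold logistic. rewrite Ropp_involutive.
  pose proof (exp_pos t). pose proof (exp_pos (-t)).
  rewrite !ln_Rinv by lra. rewrite exp_Ropp.
  replace (1 + / exp t) with ((1 + exp t) / exp t) by (field; lra).
  unfold Rdiv. rewrite ln_mult, ln_Rinv, ln_exp; try lra. apply Rinv_0_lt_compat; lra.
Qed.

Lemma logistic_logit p : 0 < p < 1 -> logistic (logit p) = p.
Proof.
  intros H. unfold logistic, logit.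
  replace (- (ln p - ln (1 - p))) with (ln ((1 - p) / p)).
  - rewrite exp_ln. field. split; lra. apply Rdiv_lt_0_compat; lra.
  - unfold Rdiv. rewrite ln_mult, ln_Rinv; try lra. apply Rinv_0_lt_compat; lra.
Qed.

Lemma eq_logistic_iff p t : 0 < p < 1 -> (p = logistic t <-> logit p = t).
Proof. intros H. split; intro E; subst. apply logit_logistic. symmetry. apply logistic_logit; auto. Qed.

(** * Equilibria and Nash distributions *)

(* [gain n u i x] is U(a_i^1, x_{-i}) - U(a_i^2, x_{-i}) = dU/dx_i (x); [gain2] is the Hessian. *)
Definition gain n u i x := pdiff i (U n u) x.
Definition gain2 n u k j x := pdiff j (gain n u k) x.

Lemma gain_affine_in_each n u k : affine_in_each n (gain n u k).
Proof. apply pdiff_affine_in_each, U_affine_in_each. Qed.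

Lemma gain_depends_below n u k : depends_below n (gain n u k).
Proof. apply pdiff_depends_below, U_depends_below. Qed.

Lemma gain_cont_at n u k y : cont_at n (gain n u k) y.
Proof. apply pdiff_cont_at. intro; apply mle_cont_at. lia. Qed.

Lemma gain2_cont_at n u k j y : cont_at n (gain2 n u k j) y.
Proof. apply pdiff_cont_at. intro; apply gain_cont_at. Qed.

Lemma U_xupd n u x i t : (i < n)%nat -> U n u (xupd x i t) = U n u (xupd x i 0) + t * gain n u i x.
Proof. intros. rewrite (U_affine_in_each n u x i t H). reflexivity. Qed.

Lemma NE_gain n u x i t : NE n u x -> (i < n)%nat -> 0 <= t <= 1 -> t * gain n u i x <= x i * gain n u i x.
Proof.
  intros [HD HN] Hi Ht. specialize (HN i Hi t Ht).
  rewrite U_xupd in HN by auto. rewrite (affine_expand n (U n u) x i (U_affine_in_each n u) Hi) in HN.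
  unfold gain in *. lra.
Qed.

Lemma NE_mixing_gain n u x i : NE n u x -> (i < n)%nat -> 0 < x i < 1 -> gain n u i x = 0.
Proof.
  intros HN Hi Hx. pose proof (NE_gain n u x i 0 HN Hi ltac:(lra)).
  pose proof (NE_gain n u x i 1 HN Hi ltac:(lra)). nra.
Qed.

Lemma NE_gain_pos n u x i : NE n u x -> (i < n)%nat -> 0 < gain n u i x -> x i = 1.
Proof.
  intros HN Hi Hd. pose proof (NE_gain n u x i 1 HN Hi ltac:(lra)).
  destruct HN as [HD _]. destruct (HD i) as [H1 _]. specialize (H1 Hi). nra.
Qed.

Lemma NE_gain_neg n u x i : NE n u x -> (i < n)%nat -> gain n u i x < 0 -> x i = 0.
Proof.
  intros HN Hi Hd. pose proof (NE_gain n u x i 0 HN Hi ltac:(lra)).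
  destruct HN as [HD _]. destruct (HD i) as [H1 _]. specialize (H1 Hi). nra.
Qed.

Lemma NE_of_gain n u x : Delta_set n x ->
  (forall i, (i < n)%nat -> (0 < gain n u i x -> x i = 1) /\ (gain n u i x < 0 -> x i = 0)) -> NE n u x.
Proof.
  intros HD H. split; auto. intros i Hi t Ht.
  rewrite U_xupd by auto. rewrite (affine_expand n (U n u) x i (U_affine_in_each n u) Hi).
  fold (gain n u i x). destruct (H i Hi) as [H1 H2].
  destruct (Rtotal_order (gain n u i x) 0) as [Hl|[He|Hg]].
  - rewrite (H2 Hl). nra.
  - rewrite He. lra.
  - rewrite (H1 Hg). nra.
Qed.

Lemma not_NE_deviation n u y : Delta_set n y -> ~ NE n u y ->
  exists i, (i < n)%nat /\ ((0 < gain n u i y /\ y i < 1) \/ (gain n u i y < 0 /\ 0 < y i)).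
Proof.
  intros HD HN. apply NNPP. intro C. apply HN. apply NE_of_gain; auto.
  intros i Hi. destruct (HD i) as [A _]. specialize (A Hi). split; intro H.
  - destruct (Req_dec (y i) 1); auto. exfalso. apply C. exists i. split; auto. left. split; auto. lra.
  - destruct (Req_dec (y i) 0); auto. exfalso. apply C. exists i. split; auto. right. split; auto. lra.
Qed.

Lemma BR_logistic n u l x i : 0 < l -> BR n u l x i = logistic (gain n u i x / l).
Proof.
  intros Hl. unfold BR, logistic, gain, pdiff.
  set (a := U n u (xupd x i 1) / l). set (b := U n u (xupd x i 0) / l).
  replace ((U n u (xupd x i 1) - U n u (xupd x i 0)) / l) with (a - b) by (unfold a, b; field; lra).
  pose proof (exp_pos a). pose proof (exp_pos b).
  replace (exp (- (a - b))) with (exp b / exp a).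
  - field. split; lra.
  - replace (- (a - b)) with (b + - a) by ring. rewrite exp_plus, exp_Ropp. auto.
Qed.

Lemma ND_iff n u l x : 0 < l ->
  (ND n u l x <-> Delta_set n x /\ forall i, (i < n)%nat -> x i = logistic (gain n u i x / l)).
Proof.
  intros Hl. unfold ND. split; intros [H1 H2]; split; auto; intros i Hi;
    rewrite (H2 i Hi) at 1; rewrite ?BR_logistic; auto.
Qed.

Lemma affine_derivable a b x : derivable_pt_lim (fun s => a + s * b) x b.
Proof.
  intros eps He. exists (mkposreal 1 ltac:(lra)). intros h Hh _.
  replace ((a + (x + h) * b - (a + x * b)) / h - b) with 0 by (field; auto).
  rewrite Rabs_R0; auto.
Qed.

(* Since U is affine in each coordinate, its second derivatives are second differences. *)
Lemma is_hess_gain2 n u x i j h : (i < n)%nat -> (j < n)%nat -> is_hess n u x i j h -> h = gain2 n u i j x.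
Proof.
  intros Hi Hj [g [Hg Hh]].
  assert (Eg : forall t, g t = gain n u i (xupd x j t)).
  { intro t. specialize (Hg t).
    assert (E : (fun s => U n u (xupd (xupd x j t) i s)) =
                (fun s => U n u (xupd (xupd x j t) i 0) + s * gain n u i (xupd x j t))).
    { apply functional_extensionality; intro s. apply U_xupd; auto. }
    rewrite E in Hg. eapply uniqueness_limite. apply Hg. apply affine_derivable. }
  assert (E2 : g = fun t => gain n u i (xupd x j 0) + t * gain2 n u i j x).
  { apply functional_extensionality; intro t. rewrite Eg. apply (gain_affine_in_each n u i x j t Hj). }
  rewrite E2 in Hh. eapply uniqueness_limite. apply Hh. apply affine_derivable.
Qed.

Definition mixingb (y : nat -> R) i : bool :=
  if Rlt_dec 0 (y i) then if Rlt_dec (y i) 1 then true else false else false.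

Definition mixing_ind y i : R := if mixingb y i then 1 else 0.

Lemma mixingb_iff y i : mixingb y i = true <-> mixing y i.
Proof.
  unfold mixingb, mixing.
  destruct (Rlt_dec 0 (y i)); destruct (Rlt_dec (y i) 1); split; intros; try discriminate; auto; lra.
Qed.

Lemma mixing_ind_mul y k A :
  (if Rlt_dec 0 (y k) then if Rlt_dec (y k) 1 then A else 0 else 0) = mixing_ind y k * A.
Proof. unfold mixing_ind, mixingb. destruct (Rlt_dec 0 (y k)); destruct (Rlt_dec (y k) 1); ring. Qed.

Lemma mixing_ind_mul_bound y (a b g : R) k : Rabs a <= g -> Rabs (mixing_ind y k * a * b) <= g * Rabs b.
Proof.
  intros H. rewrite !Rabs_mult. pose proof (Rabs_pos b). pose proof (Rabs_pos a).
  unfold mixing_ind. destruct (mixingb y k).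
  - rewrite Rabs_R1. nra.
  - rewrite Rabs_R0. nra.
Qed.

(** * Contractions for a weighted sup-norm *)

Lemma pow2_pos k : 0 < 2 ^ k.
Proof. apply pow_lt; lra. Qed.

Lemma pow2_ge k : INR k <= 2 ^ k.
Proof.
  induction k. simpl; lra. rewrite S_INR. simpl.
  assert (1 <= 2 ^ k) by (apply pow_R1_Rle; lra). lra.
Qed.

Lemma le_of_le_add_halvings a b c : 0 <= c -> (forall k, a <= b + c / 2 ^ k) -> a <= b.
Proof.
  intros Hc H. destruct (Rle_dec a b); auto. exfalso.
  destruct (INR_unbounded (c / (a - b))) as [k H1].
  specialize (H k). pose proof (pow2_ge k). pose proof (pow2_pos k).
  assert (c < (a - b) * INR k).
  { apply Rmult_lt_reg_r with (/ (a - b)). apply Rinv_0_lt_compat; lra.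
    replace ((a - b) * INR k * / (a - b)) with (INR k) by (field; lra). unfold Rdiv in H1. lra. }
  assert (c / 2 ^ k < a - b).
  { apply Rmult_lt_reg_r with (2 ^ k). auto. unfold Rdiv. rewrite Rmult_assoc, Rinv_l by lra. nra. }
  lra.
Qed.

Lemma Un_cv_abs_le (s : nat -> R) l a b k : Un_cv s l -> (forall m, (k <= m)%nat -> Rabs (s m - a) <= b) ->
  Rabs (l - a) <= b.
Proof.
  intros Hc H. destruct (Rle_dec (Rabs (l - a)) b); auto. exfalso.
  destruct (Hc (Rabs (l - a) - b)) as [N HN]. lra.
  specialize (HN (max N k) ltac:(lia)). specialize (H (max N k) ltac:(lia)). unfold R_dist in HN.
  pose proof (Rabs_triang (l - s (max N k)) (s (max N k) - a)).
  replace (l - s (max N k) + (s (max N k) - a)) with (l - a) in H0 by ring.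
  rewrite <- Rabs_Ropp in HN. replace (- (s (max N k) - l)) with (l - s (max N k)) in HN by ring. lra.
Qed.

Lemma geometric_cauchy_limit (s : nat -> R) c : 0 <= c ->
  (forall k m, (k <= m)%nat -> Rabs (s m - s k) <= c / 2 ^ k) ->
  {z | forall k, Rabs (z - s k) <= c / 2 ^ k}.
Proof.
  intros Hc H.
  assert (Hcau : Cauchy_crit s).
  { intros eps He. destruct (INR_unbounded (2 * c / eps)) as [N HN]. exists N. intros a b Ha Hb.
    unfold R_dist. pose proof (H N a Ha). pose proof (H N b Hb).
    assert (c / 2 ^ N < eps / 2).
    { pose proof (pow2_ge N). pose proof (pow2_pos N).
      assert (2 * c < eps * INR N).
      { apply Rmult_lt_reg_r with (/ eps). apply Rinv_0_lt_compat; lra.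
        replace (eps * INR N * / eps) with (INR N) by (field; lra). unfold Rdiv in HN. lra. }
      apply Rmult_lt_reg_r with (2 ^ N). auto. unfold Rdiv. rewrite Rmult_assoc, Rinv_l by lra. nra. }
    replace (s a - s b) with ((s a - s N) - (s b - s N)) by ring.
    eapply Rle_lt_trans. apply Rabs_triang. rewrite Rabs_Ropp. lra. }
  destruct (R_complete s Hcau) as [z Hz]. exists z. intro k.
  apply (Un_cv_abs_le s z (s k) _ k Hz). intros m Hm. apply H; auto.
Qed.

Definition vsub (x x' : nat -> R) i := x i - x' i.

Section WeightedNorm.

Variables (n : nat) (w : nat -> R).
Hypothesis w_ge1 : forall i, 1 <= w i.

Definition wbound r (v : nat -> R) := forall i, (i < n)%nat -> w i * Rabs (v i) <= r.

Definition in_box y r x := wbound r (vsub x y) /\ forall i, (n <= i)%nat -> x i = 0.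

Definition half_contraction y rho (Tm : (nat -> R) -> (nat -> R)) :=
  forall x x' r, in_box y rho x -> in_box y rho x' -> 0 <= r -> wbound r (vsub x x') ->
    wbound (r / 2) (vsub (Tm x) (Tm x')).

Lemma wbound_abs r v : wbound r v -> forall j, (j < n)%nat -> Rabs (v j) <= r.
Proof.
  intros H j Hj. specialize (H j Hj). pose proof (w_ge1 j).
  pose proof (Rabs_pos (v j)). nra.
Qed.

Lemma wbound_add r1 r2 v1 v2 : wbound r1 v1 -> wbound r2 v2 -> wbound (r1 + r2) (fun i => v1 i + v2 i).
Proof.
  intros H1 H2 i Hi. specialize (H1 i Hi). specialize (H2 i Hi). pose proof (w_ge1 i).
  eapply Rle_trans with (w i * (Rabs (v1 i) + Rabs (v2 i))).
  apply Rmult_le_compat_l. lra. apply Rabs_triang. lra.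
Qed.

Lemma wbound_ext r v v' : (forall i, (i < n)%nat -> v i = v' i) -> wbound r v -> wbound r v'.
Proof. intros E H i Hi. rewrite <- E; auto. Qed.

Lemma wbound_vsub_trans r1 r2 x y z : wbound r1 (vsub x y) -> wbound r2 (vsub y z) -> wbound (r1 + r2) (vsub x z).
Proof.
  intros H1 H2. apply (wbound_ext _ (fun i => vsub x y i + vsub y z i)).
  intros; unfold vsub; ring. apply wbound_add; auto.
Qed.

Lemma wbound_mono r r' v : r <= r' -> wbound r v -> wbound r' v.
Proof. intros Hr H i Hi. specialize (H i Hi). lra. Qed.

Lemma wbound_vsub_sym r x x' : wbound r (vsub x x') -> wbound r (vsub x' x).
Proof.
  intros H i Hi. unfold vsub. rewrite <- Rabs_Ropp.
  replace (- (x' i - x i)) with (x i - x' i) by ring. apply H; auto.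
Qed.

Lemma wbound_of_halvings b c v : 0 <= c -> (forall k, wbound (b + c / 2 ^ k) v) -> wbound b v.
Proof. intros Hc H i Hi. apply (le_of_le_add_halvings _ _ c Hc). intro k. apply H; auto. Qed.

Lemma wbound_iterate r0 e v : 0 <= r0 -> 0 <= e ->
  (forall r, 0 <= r -> wbound r v -> wbound (r / 2 + e) v) -> wbound r0 v -> wbound (2 * e) v.
Proof.
  intros Hr0 He H H0. apply (wbound_of_halvings (2 * e) r0 v Hr0). intro k.
  induction k.
  - simpl. eapply wbound_mono; [|exact H0]. lra.
  - pose proof (pow2_pos k).
    assert (0 <= 2 * e + r0 / 2 ^ k) by (apply Rplus_le_le_0_compat; [lra | apply Rdiv_nonneg; lra]).
    eapply wbound_mono; [| apply (H _ H2 IHk)]. simpl. apply Req_le. field. lra.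
Qed.

Lemma wbound_zero v : wbound 0 v -> forall i, (i < n)%nat -> v i = 0.
Proof.
  intros H i Hi. pose proof (wbound_abs 0 v H i Hi). pose proof (Rabs_pos (v i)).
  destruct (Req_dec (v i) 0); auto. pose proof (Rabs_pos_lt _ H2). lra.
Qed.

Lemma in_box_center y r : 0 <= r -> (forall i, (n <= i)%nat -> y i = 0) -> in_box y r y.
Proof.
  intros Hr Hy. split; auto. intros i Hi. unfold vsub.
  replace (y i - y i) with 0 by ring. rewrite Rabs_R0, Rmult_0_r. auto.
Qed.

Lemma in_box_near y r x : in_box y r x -> near n y x r.
Proof. intros [H _] j Hj. apply (wbound_abs r (vsub x y) H j Hj). Qed.

Lemma in_box_diff y r x x' : in_box y r x -> in_box y r x' -> wbound (2 * r) (vsub x x').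
Proof.
  intros [H1 _] [H2 _]. replace (2 * r) with (r + r) by ring.
  apply (wbound_vsub_trans _ _ _ y); auto. apply wbound_vsub_sym; auto.
Qed.

Lemma in_box_eq y r x x' : in_box y r x -> in_box y r x' -> wbound 0 (vsub x x') -> x = x'.
Proof.
  intros Hx Hx' H. apply functional_extensionality; intro i.
  destruct (Nat.lt_ge_cases i n) as [Hi|Hi].
  - pose proof (wbound_zero _ H i Hi). unfold vsub in *. lra.
  - destruct Hx as [_ A]. destruct Hx' as [_ B]. rewrite A, B; auto.
Qed.

Variables (y : nat -> R) (rho : R) (Tm : (nat -> R) -> (nat -> R)).
Hypothesis rho_pos : 0 < rho.
Hypothesis Tm_contraction : half_contraction y rho Tm.

Lemma contraction_fixpoint_unique z z' :
  in_box y rho z -> in_box y rho z' -> Tm z = z -> Tm z' = z' -> z = z'.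
Proof.
  intros Hz Hz' Fz Fz'. apply (in_box_eq y rho); auto.
  replace 0 with (2 * 0) by ring.
  apply (wbound_iterate (2 * rho)); try lra.
  - intros r Hr HB. rewrite Rplus_0_r, <- Fz, <- Fz'. apply Tm_contraction; auto.
  - apply (in_box_diff y); auto.
Qed.

Hypothesis y_zero : forall i, (n <= i)%nat -> y i = 0.
Hypothesis Tm_box : forall x, in_box y rho x -> in_box y rho (Tm x).

Let iterates k := Nat.iter k Tm y.

Lemma iterates_in_box k : in_box y rho (iterates k).
Proof. induction k. apply in_box_center; auto. lra. apply Tm_box; auto. Qed.

Lemma iterates_step k : wbound (2 * rho / 2 ^ k) (vsub (iterates (S k)) (iterates k)).
Proof.
  induction k.
  - replace (2 * rho / 2 ^ 0) with (2 * rho) by (simpl; field).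
    apply (in_box_diff y); apply iterates_in_box.
  - replace (2 * rho / 2 ^ S k) with (2 * rho / 2 ^ k / 2) by (simpl; field; pose proof (pow2_pos k); lra).
    change (iterates (S (S k))) with (Tm (iterates (S k))).
    change (iterates (S k)) with (Tm (iterates k)) at 2.
    apply Tm_contraction; [apply iterates_in_box | apply iterates_in_box | | exact IHk].
    apply Rdiv_nonneg. lra. apply pow2_pos.
Qed.

Lemma iterates_cauchy k m : (k <= m)%nat -> wbound (4 * rho / 2 ^ k) (vsub (iterates m) (iterates k)).
Proof.
  intros Hkm. replace m with (k + (m - k))%nat by lia.
  assert (Hd : forall d, wbound (4 * rho / 2 ^ k - 4 * rho / 2 ^ (k + d)) (vsub (iterates (k + d)) (iterates k))).
  { induction d.
    - rewrite Nat.add_0_r. intros i Hi. unfold vsub.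
      replace (iterates k i - iterates k i) with 0 by ring. rewrite Rabs_R0. lra.
    - replace (k + S d)%nat with (S (k + d)) by lia.
      eapply wbound_mono. 2: eapply (wbound_vsub_trans _ _ _ (iterates (k + d))); [apply iterates_step | apply IHd].
      simpl. pose proof (pow2_pos (k + d)). pose proof (pow2_pos k). apply Req_le. field. lra. }
  eapply wbound_mono; [|apply Hd]. pose proof (pow2_pos (k + (m - k))).
  assert (0 <= 4 * rho / 2 ^ (k + (m - k))) by (apply Rdiv_nonneg; lra). lra.
Qed.

Lemma iterates_coord_cauchy i k m : (k <= m)%nat ->
  Rabs (iterates m i - iterates k i) <= 4 * rho / w i / 2 ^ k.
Proof.
  intros Hkm. pose proof (pow2_pos k). pose proof (w_ge1 i).
  destruct (Nat.lt_ge_cases i n) as [Hi|Hi].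
  - pose proof (iterates_cauchy k m Hkm i Hi) as H1. unfold vsub in H1.
    apply Rmult_le_reg_l with (w i). lra.
    replace (w i * (4 * rho / w i / 2 ^ k)) with (4 * rho / 2 ^ k) by (field; lra). auto.
  - destruct (iterates_in_box m) as [_ A]. destruct (iterates_in_box k) as [_ B].
    rewrite A, B, Rminus_0_r, Rabs_R0 by auto.
    apply Rdiv_nonneg; [apply Rdiv_nonneg|]; lra.
Qed.

Lemma contraction_fixpoint_exists : exists z, in_box y rho z /\ Tm z = z.
Proof.
  assert (Hw : forall i, 0 < w i) by (intro i; pose proof (w_ge1 i); lra).
  pose proof iterates_coord_cauchy as Hcau.
  assert (Hc : forall i, 0 <= 4 * rho / w i) by (intro i; apply Rdiv_nonneg; [lra | auto]).
  set (z := fun i => proj1_sig (geometric_cauchy_limit (fun m => iterates m i) _ (Hc i) (Hcau i))).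
  assert (Hzk : forall i k, Rabs (z i - iterates k i) <= 4 * rho / w i / 2 ^ k).
  { intros i k. apply (proj2_sig (geometric_cauchy_limit (fun m => iterates m i) _ (Hc i) (Hcau i))). }
  assert (Hz : forall k, wbound (4 * rho / 2 ^ k) (vsub z (iterates k))).
  { intros k i Hi. specialize (Hzk i k). pose proof (pow2_pos k). pose proof (Hw i).
    apply Rmult_le_compat_l with (r := w i) in Hzk; [|lra].
    eapply Rle_trans. apply Hzk. apply Req_le. field. lra. }
  assert (Zbox : in_box y rho z).
  { split.
    - apply (wbound_of_halvings rho (4 * rho)). lra. intro k. rewrite Rplus_comm.
      apply (wbound_vsub_trans _ _ _ (iterates k)); auto. apply iterates_in_box.
    - intros i Hi.
      assert (Rabs (z i) <= 0).
      { apply (le_of_le_add_halvings _ 0 (4 * rho / w i)); auto.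
        intro k. specialize (Hzk i k). destruct (iterates_in_box k) as [_ A].
        rewrite A, Rminus_0_r in Hzk by auto. lra. }
      pose proof (Rabs_pos (z i)). destruct (Req_dec (z i) 0); auto.
      pose proof (Rabs_pos_lt _ H1). lra. }
  exists z. split; auto. apply (in_box_eq y rho); auto.
  apply (wbound_of_halvings 0 (4 * rho)). lra. intro k.
  apply (wbound_ext _ (fun i => vsub (Tm z) (Tm (iterates k)) i + vsub (iterates (S k)) z i)).
  { intros; unfold vsub; simpl; ring. }
  pose proof (pow2_pos k).
  eapply wbound_mono. 2: apply wbound_add.
  2: apply (Tm_contraction z (iterates k) (4 * rho / 2 ^ k)); auto; [apply iterates_in_box | apply Rdiv_nonneg; lra].
  2: apply wbound_vsub_sym, Hz.
  simpl. apply Req_le. field. lra.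
Qed.

End WeightedNorm.

(** * Near a regular equilibrium *)

Set Implicit Arguments.
(* Data attached to an equilibrium y: [G] inverts the restricted Hessian at y (sums over mixing players
   only); on the [rho]-neighbourhood of y the Hessian moves by at most [eps] and is bounded by [Cb],
   pure players keep a payoff gap of at least [dd], and logit is [Lg]-Lipschitz on mixing coordinates.
   [K] is the weight given to pure coordinates in the sup-norm. *)
Record local_data n u (y : nat -> R) (G : nat -> nat -> R) (g eps Cb dd rho Lg Cl K : R) : Prop := {
  ld_NE : NE n u y;
  ld_inv_l : forall i j, (i < n)%nat -> (j < n)%nat -> mixingb y i = true -> mixingb y j = true ->
     sum_lt n (fun k => mixing_ind y k * (G i k * gain2 n u k j y)) = if Nat.eqb i j then 1 else 0;
  ld_inv_r : forall i j, (i < n)%nat -> (j < n)%nat -> mixingb y i = true -> mixingb y j = true ->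
     sum_lt n (fun k => mixing_ind y k * (gain2 n u i k y * G k j)) = if Nat.eqb i j then 1 else 0;
  ld_g_nonneg : 0 <= g;
  ld_G_bound : forall i k, (i < n)%nat -> (k < n)%nat -> Rabs (G i k) <= g;
  ld_rho_pos : 0 < rho;
  ld_K_ge1 : 1 <= K;
  ld_eps_nonneg : 0 <= eps;
  ld_gain2_cont : forall z, near n y z rho -> forall k j, (k < n)%nat -> (j < n)%nat ->
     Rabs (gain2 n u k j z - gain2 n u k j y) <= eps;
  ld_Cb_nonneg : 0 <= Cb;
  ld_gain2_bound : forall z, near n y z rho -> forall k j, (k < n)%nat -> (j < n)%nat ->
     Rabs (gain2 n u k j z) <= Cb;
  ld_dd_pos : 0 < dd;
  ld_pure_gap : forall i, (i < n)%nat -> mixingb y i = false -> forall z, near n y z rho ->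
     (y i = 1 /\ dd <= gain n u i z) \/ (y i = 0 /\ gain n u i z <= - dd);
  ld_mixing_interior : forall k, (k < n)%nat -> mixingb y k = true -> forall p, Rabs (p - y k) <= rho -> 0 < p < 1;
  ld_Lg_nonneg : 0 <= Lg;
  ld_logit_lipschitz : forall k, (k < n)%nat -> mixingb y k = true -> forall p p', Rabs (p - y k) <= rho ->
     Rabs (p' - y k) <= rho -> Rabs (logit p - logit p') <= Lg * Rabs (p - p');
  ld_Cl_nonneg : 0 <= Cl;
  ld_logit_bound : forall k, (k < n)%nat -> mixingb y k = true -> Rabs (logit (y k)) <= Cl;
  ld_small : INR n * INR n * g * (eps + Cb / K) <= 1/4
}.
Unset Implicit Arguments.


Definition wt y K i : R := if mixingb y i then 1 else K.

Section NearRegularEquilibrium.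

Variables (n : nat) (u : list bool -> R) (y : nat -> R) (G : nat -> nat -> R) (g eps Cb dd rho Lg Cl K : R).
Hypothesis HL : local_data n u y G g eps Cb dd rho Lg Cl K.

Let HK := ld_K_ge1 HL.
Let Hg := ld_g_nonneg HL.
Let Hrho := ld_rho_pos HL.

Local Notation wbd := (wbound n (wt y K)).
Local Notation box := (in_box n (wt y K) y rho).

Lemma wt_ge1 i : 1 <= wt y K i.
Proof. unfold wt; destruct (mixingb y i); lra. Qed.

Lemma y_Delta : Delta_set n y.
Proof. destruct (ld_NE HL); auto. Qed.

Lemma y_zero i : (n <= i)%nat -> y i = 0.
Proof. intros. destruct (y_Delta i) as [_ A]. auto. Qed.

Lemma y_mixing_gain k : (k < n)%nat -> mixingb y k = true -> gain n u k y = 0.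
Proof. intros Hk Ek. apply (NE_mixing_gain n u y k (ld_NE HL) Hk). apply mixingb_iff; auto. Qed.

Definition newton_step l (x : nat -> R) i :=
  x i - sum_lt n (fun k => mixing_ind y k * G i k * (gain n u k x - l * logit (x k))).

Definition local_map l (x : nat -> R) i : R :=
  if Nat.ltb i n then (if mixingb y i then newton_step l x i else logistic (gain n u i x / l)) else 0.

Lemma local_map_mixing l x i : (i < n)%nat -> mixingb y i = true -> local_map l x i = newton_step l x i.
Proof. intros Hi Ei. unfold local_map. apply Nat.ltb_lt in Hi. rewrite Hi, Ei. auto. Qed.

Lemma local_map_pure l x i : (i < n)%nat -> mixingb y i = false -> local_map l x i = logistic (gain n u i x / l).
Proof. intros Hi Ei. unfold local_map. apply Nat.ltb_lt in Hi. rewrite Hi, Ei. auto. Qed.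

Lemma local_map_outside l x i : (n <= i)%nat -> local_map l x i = 0.
Proof. intros. unfold local_map. destruct (Nat.ltb_spec i n). lia. auto. Qed.

(* Since G inverts the Hessian on mixing coordinates, the linear part of the step cancels exactly and
   only the Hessian's variation along the segment remains. *)
Lemma newton_step_sub l x x' i : (i < n)%nat -> mixingb y i = true ->
  newton_step l x i - newton_step l x' i =
  sum_lt n (fun j => vsub x x' j * sum_lt n (fun k => mixing_ind y k * G i k *
      (mixing_ind y j * gain2 n u k j y - gain2 n u k j (splice j x x'))))
  + l * sum_lt n (fun k => mixing_ind y k * G i k * (logit (x k) - logit (x' k))).
Proof.
  intros Hi Hmi. unfold newton_step.
  set (a := fun k => mixing_ind y k * G i k).
  assert (E1 : sum_lt n (fun k => mixing_ind y k * G i k * (gain n u k x - l * logit (x k))) -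
               sum_lt n (fun k => mixing_ind y k * G i k * (gain n u k x' - l * logit (x' k))) =
               sum_lt n (fun k => a k * (gain n u k x - gain n u k x')) -
               l * sum_lt n (fun k => mixing_ind y k * G i k * (logit (x k) - logit (x' k)))).
  { rewrite <- sum_lt_sub, <- sum_lt_scal, <- sum_lt_sub. apply sum_lt_ext; intros.
    unfold a. ring. }
  assert (E2 : sum_lt n (fun k => a k * (gain n u k x - gain n u k x')) =
               sum_lt n (fun j => vsub x x' j * sum_lt n (fun k => a k * gain2 n u k j (splice j x x')))).
  { rewrite <- sum_lt_comm_scal. apply sum_lt_ext; intros k Hk. f_equal.
    apply (affine_telescope n (gain n u k) x x' (gain_affine_in_each n u k) (gain_depends_below n u k)). }
  assert (E3 : sum_lt n (fun j => vsub x x' j * sum_lt n (fun k => a k * (mixing_ind y j * gain2 n u k j y)))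
               = vsub x x' i).
  { transitivity (sum_lt n (fun j => (if Nat.eqb i j then 1 else 0) * vsub x x' j)).
    - apply sum_lt_ext; intros j Hj.
      replace (mixing_ind y j) with (if mixingb y j then 1 else 0) by reflexivity.
      destruct (mixingb y j) eqn:Ej.
      + rewrite <- (ld_inv_l HL Hi Hj Hmi Ej), Rmult_comm. f_equal.
        apply sum_lt_ext; intros. unfold a. ring.
      + rewrite sum_lt_zero by (intros; ring).
        destruct (Nat.eqb_spec i j). subst. congruence. ring.
    - apply sum_lt_kronecker; auto. }
  assert (E4 : sum_lt n (fun j => vsub x x' j * sum_lt n (fun k => mixing_ind y k * G i k *
      (mixing_ind y j * gain2 n u k j y - gain2 n u k j (splice j x x')))) =
      sum_lt n (fun j => vsub x x' j * sum_lt n (fun k => a k * (mixing_ind y j * gain2 n u k j y))) -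
      sum_lt n (fun j => vsub x x' j * sum_lt n (fun k => a k * gain2 n u k j (splice j x x')))).
  { rewrite <- sum_lt_sub. apply sum_lt_ext; intros. rewrite <- Rmult_minus_distr_l. f_equal.
    rewrite <- sum_lt_sub. apply sum_lt_ext; intros. unfold a. ring. }
  rewrite E4, E3, <- E2. unfold vsub in *. lra.
Qed.

Lemma hessian_variation_bound x x' r i j :
  near n y x rho -> near n y x' rho -> 0 <= r -> wbd r (vsub x x') -> (i < n)%nat -> (j < n)%nat ->
  Rabs (vsub x x' j * sum_lt n (fun k => mixing_ind y k * G i k *
      (mixing_ind y j * gain2 n u k j y - gain2 n u k j (splice j x x'))))
  <= r * (INR n * g * (eps + Cb / K)).
Proof.
  intros Hx Hx' Hr HB Hi Hj. rewrite Rabs_mult.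
  pose proof (pos_INR n). pose proof (ld_eps_nonneg HL). pose proof (ld_Cb_nonneg HL).
  assert (HCK : 0 <= Cb / K) by (apply Rdiv_nonneg; lra).
  pose proof (Rabs_pos (vsub x x' j)).
  specialize (HB j Hj). unfold wt in HB.
  replace (mixing_ind y j) with (if mixingb y j then 1 else 0) by reflexivity.
  destruct (mixingb y j) eqn:Ej.
  - assert (Rabs (sum_lt n (fun k => mixing_ind y k * G i k *
              (1 * gain2 n u k j y - gain2 n u k j (splice j x x')))) <= INR n * (g * eps)).
    { apply sum_lt_abs_le. intros k Hk. eapply Rle_trans. apply mixing_ind_mul_bound.
      apply (ld_G_bound HL); auto. apply Rmult_le_compat_l; auto.
      rewrite Rmult_1_l, <- Rabs_Ropp.
      replace (- (gain2 n u k j y - gain2 n u k j (splice j x x')))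
        with (gain2 n u k j (splice j x x') - gain2 n u k j y) by ring.
      apply (ld_gain2_cont HL); auto. apply near_splice; auto. }
    assert (0 <= INR n * g * (Cb / K)) by (apply Rmult_le_pos; [apply Rmult_le_pos|]; auto).
    apply Rle_trans with (r * (INR n * (g * eps))). apply Rmult_le_compat; try apply Rabs_pos; lra.
    apply Rmult_le_compat_l; auto. lra.
  - assert (Rabs (sum_lt n (fun k => mixing_ind y k * G i k *
              (0 * gain2 n u k j y - gain2 n u k j (splice j x x')))) <= INR n * (g * Cb)).
    { apply sum_lt_abs_le. intros k Hk. eapply Rle_trans. apply mixing_ind_mul_bound.
      apply (ld_G_bound HL); auto. apply Rmult_le_compat_l; auto.
      replace (0 * gain2 n u k j y - gain2 n u k j (splice j x x'))
        with (- gain2 n u k j (splice j x x')) by ring.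
      rewrite Rabs_Ropp. apply (ld_gain2_bound HL); auto. apply near_splice; auto. }
    assert (Rabs (vsub x x' j) <= r / K).
    { apply Rmult_le_reg_l with K. lra. replace (K * (r / K)) with r by (field; lra). lra. }
    apply Rle_trans with (r / K * (INR n * (g * Cb))). apply Rmult_le_compat; try apply Rabs_pos; lra.
    replace (r / K * (INR n * (g * Cb))) with (r * (INR n * g * (Cb / K))) by (field; lra).
    apply Rmult_le_compat_l; auto. apply Rmult_le_compat_l. nra. lra.
Qed.

Lemma newton_step_lipschitz l x x' r i :
  0 <= l -> near n y x rho -> near n y x' rho -> 0 <= r -> wbd r (vsub x x') ->
  (i < n)%nat -> mixingb y i = true ->
  Rabs (newton_step l x i - newton_step l x' i) <=
    r * (INR n * INR n * g * (eps + Cb / K) + INR n * g * l * Lg).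
Proof.
  intros Hl Hx Hx' Hr HB Hi Hmi. rewrite (newton_step_sub l x x' i Hi Hmi).
  pose proof (pos_INR n). pose proof (ld_Lg_nonneg HL).
  assert (A1 := sum_lt_abs_le n _ _ (fun j Hj => hessian_variation_bound x x' r i j Hx Hx' Hr HB Hi Hj)).
  assert (A2 : Rabs (l * sum_lt n (fun k => mixing_ind y k * G i k * (logit (x k) - logit (x' k))))
               <= l * (INR n * (g * (Lg * r)))).
  { rewrite Rabs_mult, (Rabs_right l) by lra. apply Rmult_le_compat_l; auto.
    apply sum_lt_abs_le. intros k Hk. destruct (mixingb y k) eqn:Ek.
    - eapply Rle_trans. apply (mixing_ind_mul_bound y (G i k) _ g k (ld_G_bound HL Hi Hk)).
      apply Rmult_le_compat_l; auto. eapply Rle_trans.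
      apply (ld_logit_lipschitz HL Hk Ek); [apply Hx; auto | apply Hx'; auto].
      apply Rmult_le_compat_l; auto. specialize (HB k Hk). unfold wt in HB. rewrite Ek in HB.
      unfold vsub in HB. lra.
    - replace (mixing_ind y k) with 0 by (unfold mixing_ind; rewrite Ek; auto).
      rewrite !Rmult_0_l, Rabs_R0. apply Rmult_le_pos; auto. apply Rmult_le_pos; auto. }
  eapply Rle_trans. apply Rabs_triang.
  apply Rle_trans with (INR n * (r * (INR n * g * (eps + Cb / K))) + l * (INR n * (g * (Lg * r)))). lra.
  apply Req_le. ring.
Qed.

Lemma gain_lipschitz x x' r i :
  near n y x rho -> near n y x' rho -> 0 <= r -> wbd r (vsub x x') -> (i < n)%nat ->
  Rabs (gain n u i x - gain n u i x') <= INR n * (r * Cb).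
Proof.
  intros Hx Hx' Hr HB Hi.
  rewrite (affine_telescope n (gain n u i) x x' (gain_affine_in_each n u i) (gain_depends_below n u i)).
  apply sum_lt_abs_le. intros j Hj. rewrite Rabs_mult.
  apply Rmult_le_compat; try apply Rabs_pos.
  - apply (wbound_abs n (wt y K) wt_ge1 r (vsub x x') HB j Hj).
  - apply (ld_gain2_bound HL); auto. apply near_splice; auto.
Qed.

(* A pure player's payoff gap stays beyond dd, where logistic(./l) is flat to order exp(-dd/l)/l. *)
Lemma logistic_gain_lipschitz l x x' r i :
  0 < l -> near n y x rho -> near n y x' rho -> 0 <= r -> wbd r (vsub x x') ->
  (i < n)%nat -> mixingb y i = false ->
  Rabs (logistic (gain n u i x / l) - logistic (gain n u i x' / l)) <= 4 * l / (dd * dd) * (INR n * (r * Cb)).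
Proof.
  intros Hl Hx Hx' Hr HB Hi Hmi.
  pose proof (ld_dd_pos HL) as Hdd.
  pose proof (gain_lipschitz x x' r i Hx Hx' Hr HB Hi) as HDB.
  assert (Flat : forall a b, dd <= a -> dd <= b ->
     Rabs (logistic (a / l) - logistic (b / l)) <= 4 * l / (dd * dd) * Rabs (a - b)).
  { intros a b H1 H2. eapply Rle_trans. apply (logistic_lipschitz_above _ _ (dd / l));
      unfold Rdiv; apply Rmult_le_compat_r; try (apply Rlt_le, Rinv_0_lt_compat); lra.
    pose proof (exp_opp_div_le_sq dd l Hdd Hl). pose proof (Rabs_pos (a - b)).
    replace (a / l - b / l) with ((a - b) / l) by (field; lra).
    unfold Rdiv at 2. rewrite Rabs_mult, (Rabs_right (/ l)) by (apply Rle_ge, Rlt_le, Rinv_0_lt_compat; lra).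
    apply Rle_trans with (exp (- (dd / l)) / l * Rabs (a - b)). apply Req_le. unfold Rdiv. ring.
    apply Rmult_le_compat_r; auto. }
  assert (0 <= 4 * l / (dd * dd)) by (apply Rdiv_nonneg; nra).
  destruct (ld_pure_gap HL Hi Hmi Hx) as [[Ey Hd]|[Ey Hd]];
  destruct (ld_pure_gap HL Hi Hmi Hx') as [[Ey' Hd']|[Ey' Hd']]; try lra.
  - eapply Rle_trans. apply Flat; auto. apply Rmult_le_compat_l; auto.
  - replace (logistic (gain n u i x / l) - logistic (gain n u i x' / l))
      with (logistic (- gain n u i x' / l) - logistic (- gain n u i x / l)).
    + eapply Rle_trans. apply Flat; lra. apply Rmult_le_compat_l; auto.
      replace (- gain n u i x' - - gain n u i x) with (gain n u i x - gain n u i x') by ring. auto.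
    + unfold Rdiv. rewrite !Ropp_mult_distr_l_reverse, !logistic_opp. ring.
Qed.

Definition admissible l := 0 < l /\ INR n * g * l * Lg <= 1/4 /\
  K * (4 * l / (dd * dd)) * INR n * Cb <= 1/2 /\ l * (INR n * g * Cl + K / dd) <= rho / 2.

Lemma admissible_le l l' : admissible l -> 0 < l' -> l' <= l -> admissible l'.
Proof.
  intros [H0 [H1 [H2 H3]]] Hl' Hle. pose proof (pos_INR n).
  pose proof (ld_Lg_nonneg HL). pose proof (ld_Cl_nonneg HL). pose proof (ld_dd_pos HL). pose proof (ld_Cb_nonneg HL).
  assert (0 <= INR n * g * Lg) by (apply Rmult_le_pos; [apply Rmult_le_pos|]; auto).
  assert (0 <= K * (4 / (dd * dd)) * INR n * Cb).
  { assert (0 <= 4 / (dd*dd)) by (apply Rlt_le, Rdiv_lt_0_compat; nra).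
    apply Rmult_le_pos; [apply Rmult_le_pos; [apply Rmult_le_pos|]|]; lra. }
  assert (0 <= INR n * g * Cl + K / dd).
  { apply Rplus_le_le_0_compat. apply Rmult_le_pos; [apply Rmult_le_pos|]; auto. apply Rdiv_nonneg; lra. }
  split; auto. split; [|split].
  - replace (INR n * g * l' * Lg) with ((INR n * g * Lg) * l') by ring.
    replace (INR n * g * l * Lg) with ((INR n * g * Lg) * l) in H1 by ring. nra.
  - replace (K * (4 * l' / (dd * dd)) * INR n * Cb) with ((K * (4 / (dd * dd)) * INR n * Cb) * l') by (field; lra).
    replace (K * (4 * l / (dd * dd)) * INR n * Cb) with ((K * (4 / (dd * dd)) * INR n * Cb) * l) in H2 by (field; lra).
    nra.
  - nra.
Qed.

Lemma local_map_contraction l x x' r : admissible l ->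
  near n y x rho -> near n y x' rho -> 0 <= r -> wbd r (vsub x x') ->
  wbd (r / 2) (vsub (local_map l x) (local_map l x')).
Proof.
  intros [Hl [H1 [H2 H3]]] Hx Hx' Hr HB i Hi. unfold vsub, wt.
  destruct (mixingb y i) eqn:Ei.
  - rewrite !local_map_mixing, Rmult_1_l by auto.
    eapply Rle_trans. apply (newton_step_lipschitz l x x' r i); auto; lra.
    pose proof (ld_small HL). nra.
  - rewrite !local_map_pure by auto.
    eapply Rle_trans. apply Rmult_le_compat_l. lra.
    apply (logistic_gain_lipschitz l x x' r i); auto.
    replace (K * (4 * l / (dd * dd) * (INR n * (r * Cb)))) with (r * (K * (4 * l / (dd * dd)) * INR n * Cb)) by ring.
    nra.
Qed.

Lemma local_map_half_contraction l : admissible l -> half_contraction n (wt y K) y rho (local_map l).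
Proof.
  intros Hl x x' r Hx Hx' Hr HB. apply local_map_contraction; auto;
    eapply in_box_near; eauto; apply wt_ge1.
Qed.

Lemma newton_step_center l i : 0 < l -> (i < n)%nat ->
  Rabs (newton_step l y i - y i) <= l * (INR n * g * Cl).
Proof.
  intros Hl Hi. pose proof (ld_Cl_nonneg HL). pose proof (pos_INR n). unfold newton_step.
  replace (y i - sum_lt n (fun k => mixing_ind y k * G i k * (gain n u k y - l * logit (y k))) - y i)
    with (l * sum_lt n (fun k => mixing_ind y k * G i k * logit (y k))).
  - rewrite Rabs_mult, (Rabs_right l) by lra.
    apply Rmult_le_compat_l. lra. rewrite Rmult_assoc. apply sum_lt_abs_le. intros k Hk.
    destruct (mixingb y k) eqn:Ek.
    + eapply Rle_trans. apply mixing_ind_mul_bound. apply (ld_G_bound HL); auto.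
      apply Rmult_le_compat_l; auto. apply (ld_logit_bound HL); auto.
    + replace (mixing_ind y k) with 0 by (unfold mixing_ind; rewrite Ek; auto).
      rewrite !Rmult_0_l, Rabs_R0. apply Rmult_le_pos; auto.
  - rewrite <- sum_lt_scal.
    assert (sum_lt n (fun k => mixing_ind y k * G i k * (gain n u k y - l * logit (y k))) =
            sum_lt n (fun _ => 0) - sum_lt n (fun k => l * (mixing_ind y k * G i k * logit (y k)))).
    { rewrite <- sum_lt_sub. apply sum_lt_ext. intros k Hk. unfold mixing_ind.
      destruct (mixingb y k) eqn:Ek; [rewrite y_mixing_gain by auto|]; ring. }
    rewrite H1, (sum_lt_zero n (fun _ => 0)) by auto. ring.
Qed.

Lemma logistic_gain_center l i : 0 < l -> (i < n)%nat -> mixingb y i = false ->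
  Rabs (logistic (gain n u i y / l) - y i) <= l / dd.
Proof.
  intros Hl Hi Ei. pose proof (ld_dd_pos HL) as Hdd.
  assert (Hex : exp (- (dd / l)) <= l / dd) by (apply exp_opp_div_le; auto).
  destruct (ld_pure_gap HL Hi Ei (near_refl n y rho ltac:(lra))) as [[Ey Hd]|[Ey Hd]]; rewrite Ey.
  - assert (dd / l <= gain n u i y / l)
      by (unfold Rdiv; apply Rmult_le_compat_r; [apply Rlt_le, Rinv_0_lt_compat|]; lra).
    pose proof (logistic_near_one _ _ H). rewrite Rabs_left1 by lra. lra.
  - assert (dd / l <= - (gain n u i y / l)).
    { replace (- (gain n u i y / l)) with ((- gain n u i y) / l) by (field; lra).
      unfold Rdiv; apply Rmult_le_compat_r; [apply Rlt_le, Rinv_0_lt_compat|]; lra. }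
    pose proof (logistic_near_one _ _ H). rewrite logistic_opp in H0.
    rewrite Rminus_0_r, Rabs_right by lra. lra.
Qed.

Lemma local_map_center l : 0 < l ->
  wbd (l * (INR n * g * Cl + K / dd)) (vsub (local_map l y) y).
Proof.
  intros Hl i Hi. unfold vsub, wt.
  pose proof (ld_dd_pos HL). pose proof (ld_Cl_nonneg HL). pose proof (pos_INR n).
  assert (0 <= K / dd) by (apply Rdiv_nonneg; lra).
  assert (0 <= INR n * g * Cl) by (apply Rmult_le_pos; [apply Rmult_le_pos|]; auto).
  destruct (mixingb y i) eqn:Ei.
  - rewrite local_map_mixing, Rmult_1_l by auto.
    eapply Rle_trans. apply newton_step_center; auto. apply Rmult_le_compat_l; lra.
  - rewrite local_map_pure by auto.
    eapply Rle_trans. apply Rmult_le_compat_l. lra. apply logistic_gain_center; auto.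
    replace (K * (l / dd)) with (l * (K / dd)) by (field; lra). apply Rmult_le_compat_l; lra.
Qed.

Lemma local_map_box l x : admissible l -> box x -> box (local_map l x).
Proof.
  intros Hl Hx. split.
  - replace rho with (rho / 2 + rho / 2) by field.
    apply (wbound_vsub_trans n (wt y K) wt_ge1 _ _ _ (local_map l y)).
    + apply (local_map_half_contraction l Hl x y rho Hx); [| lra | apply Hx].
      apply in_box_center; [lra | apply y_zero].
    + destruct Hl as [Hl [_ [_ H3]]]. eapply wbound_mono; [exact H3|]. apply local_map_center; auto.
  - intros; apply local_map_outside; auto.
Qed.

Lemma near_shrink x : near n y x (rho / K) -> near n y x rho.
Proof.
  intros Hn j Hj. specialize (Hn j Hj). apply Rle_trans with (rho / K); auto.
  apply Rmult_le_reg_l with K. lra. replace (K * (rho / K)) with rho by (field; lra). nra.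
Qed.

Lemma in_box_of_near x : Delta_set n x -> near n y x (rho / K) -> box x.
Proof.
  intros HDx Hn. split.
  - intros i Hi. unfold vsub. pose proof (Hn i Hi). pose proof (wt_ge1 i).
    assert (wt y K i <= K) by (unfold wt; destruct (mixingb y i); lra).
    apply Rle_trans with (K * (rho / K)). apply Rmult_le_compat; try lra. apply Rabs_pos.
    apply Req_le; field; lra.
  - intros i Hi. destruct (HDx i) as [_ A]; auto.
Qed.

Lemma newton_step_zero z i : (forall k, (k < n)%nat -> mixingb y k = true -> gain n u k z = 0) ->
  newton_step 0 z i = z i.
Proof.
  intros H. unfold newton_step. rewrite sum_lt_zero. ring. intros k Hk. unfold mixing_ind.
  destruct (mixingb y k) eqn:Ek; [rewrite H by auto|]; ring.
Qed.

(* An equilibrium near y is a fixed point of the temperature-0 map, which is still a contraction. *)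
Lemma NE_near_center x : NE n u x -> near n y x (rho / K) -> x = y.
Proof.
  intros HNE Hn. pose proof (near_shrink x Hn) as Hnr.
  assert (HDx : forall k, (k < n)%nat -> mixingb y k = true -> gain n u k x = 0).
  { intros k Hk Ek. apply (NE_mixing_gain n u x k HNE Hk). apply (ld_mixing_interior HL Hk Ek). apply Hnr; auto. }
  assert (Hpure : forall i, (i < n)%nat -> mixingb y i = false -> x i = y i).
  { intros i Hi Ei. pose proof (ld_dd_pos HL).
    destruct (ld_pure_gap HL Hi Ei Hnr) as [[Ey Hd]|[Ey Hd]]; rewrite Ey.
    - apply (NE_gain_pos n u x i HNE Hi). lra.
    - apply (NE_gain_neg n u x i HNE Hi). lra. }
  apply (in_box_eq n (wt y K) wt_ge1 y rho); [apply in_box_of_near; [apply HNE | auto] | apply in_box_center; auto; [lra | apply y_zero] |].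
  replace 0 with (2 * 0) by ring. apply (wbound_iterate n (wt y K) rho); try lra.
  - intros r Hr0 HB i Hi. rewrite Rplus_0_r. unfold wt, vsub. destruct (mixingb y i) eqn:Ei.
    + rewrite Rmult_1_l, <- (newton_step_zero x i HDx), <- (newton_step_zero y i (fun k Hk _ => y_mixing_gain k Hk ltac:(auto))).
      eapply Rle_trans. apply (newton_step_lipschitz 0 x y r i); auto; try lra. apply near_refl; lra.
      pose proof (ld_small HL). nra.
    + rewrite Hpure by auto. replace (y i - y i) with 0 by ring. rewrite Rabs_R0. nra.
  - apply in_box_of_near; auto. apply HNE.
Qed.

Lemma fixpoint_ND l z : 0 < l -> box z -> local_map l z = z -> ND n u l z.
Proof.
  intros Hl Hb Hf. pose proof (in_box_near n (wt y K) wt_ge1 y rho z Hb) as Hnz.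
  assert (Hmix : forall i, (i < n)%nat -> mixingb y i = true -> 0 < z i < 1).
  { intros i Hi Ei. apply (ld_mixing_interior HL Hi Ei). apply Hnz; auto. }
  set (v := fun k => gain n u k z - l * logit (z k)).
  assert (Hs : forall i, (i < n)%nat -> mixingb y i = true -> sum_lt n (fun k => mixing_ind y k * G i k * v k) = 0).
  { intros i Hi Ei. pose proof (local_map_mixing l z i Hi Ei) as E.
    rewrite Hf in E. unfold newton_step in E. unfold v. lra. }
  (* multiplying the vanishing Newton correction by the Hessian shows v vanishes on mixing players *)
  assert (Hv : forall i, (i < n)%nat -> mixingb y i = true -> v i = 0).
  { intros i Hi Ei.
    transitivity (sum_lt n (fun j => (if Nat.eqb i j then 1 else 0) * (mixing_ind y j * v j))).
    { rewrite sum_lt_kronecker; auto. unfold mixing_ind; rewrite Ei; ring. }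
    transitivity (sum_lt n (fun j => mixing_ind y j * v j * sum_lt n (fun k => mixing_ind y k * (gain2 n u i k y * G k j)))).
    { apply sum_lt_ext; intros j Hj.
      replace (mixing_ind y j) with (if mixingb y j then 1 else 0) by reflexivity.
      destruct (mixingb y j) eqn:Ej.
      - rewrite (ld_inv_r HL Hi Hj Ei Ej). ring.
      - ring. }
    transitivity (sum_lt n (fun k => mixing_ind y k * gain2 n u i k y * sum_lt n (fun j => mixing_ind y j * G k j * v j))).
    { rewrite sum_lt_comm_scal. apply sum_lt_ext; intros k Hk.
      rewrite <- (sum_lt_scal n (mixing_ind y k * gain2 n u i k y)), <- sum_lt_scal.
      apply sum_lt_ext; intros j Hj. ring. }
    apply sum_lt_zero. intros k Hk. destruct (mixingb y k) eqn:Ek.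
    - rewrite (Hs k Hk Ek). ring.
    - unfold mixing_ind. rewrite Ek. ring. }
  apply ND_iff; auto. split.
  - intros i. split.
    + intros Hi. destruct (mixingb y i) eqn:Ei. pose proof (Hmix i Hi Ei); lra.
      pose proof (local_map_pure l z i Hi Ei) as E. rewrite Hf in E. rewrite E.
      pose proof (logistic_range (gain n u i z / l)). lra.
    + destruct Hb as [_ A]. auto.
  - intros i Hi. destruct (mixingb y i) eqn:Ei.
    + apply eq_logistic_iff. apply Hmix; auto. specialize (Hv i Hi Ei). unfold v in Hv.
      apply Rmult_eq_reg_l with l. field_simplify; lra. lra.
    + pose proof (local_map_pure l z i Hi Ei) as E. rewrite Hf in E. exact E.
Qed.

Lemma ND_fixpoint l z : 0 < l -> ND n u l z -> near n y z rho -> local_map l z = z.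
Proof.
  intros Hl HND Hnz. apply ND_iff in HND; auto. destruct HND as [HD HE].
  apply functional_extensionality; intro i. destruct (Nat.ltb_spec i n) as [Hi|Hi].
  - destruct (mixingb y i) eqn:Ei.
    + rewrite local_map_mixing by auto. unfold newton_step. rewrite sum_lt_zero. ring.
      intros k Hk. unfold mixing_ind. destruct (mixingb y k) eqn:Ek; [|ring].
      assert (0 < z k < 1) by (apply (ld_mixing_interior HL Hk Ek); apply Hnz; auto).
      pose proof (HE k Hk). apply eq_logistic_iff in H0; auto. rewrite H0. field. lra.
    + rewrite local_map_pure by auto. rewrite <- HE; auto.
  - rewrite local_map_outside by auto. destruct (HD i) as [_ A]. rewrite A; auto.
Qed.

Lemma local_map_temp_lipschitz z l0 : 0 < l0 ->
  exists C, 0 <= C /\ forall l, l0 / 2 <= l ->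
    wbd (C * Rabs (l - l0)) (vsub (local_map l z) (local_map l0 z)).
Proof.
  intros Hl0.
  destruct (exists_abs_bound n (fun k => logit (z k))) as [Lz [HLz HLzb]].
  destruct (exists_abs_bound n (fun k => gain n u k z)) as [Dz [HDz HDzb]].
  pose proof (pos_INR n) as Hn.
  exists (INR n * g * Lz + K * Dz * (2 / (l0 * l0))).
  assert (H2 : 0 <= 2 / (l0 * l0)) by (apply Rlt_le, Rdiv_lt_0_compat; nra).
  assert (HA : 0 <= INR n * g * Lz) by (apply Rmult_le_pos; [apply Rmult_le_pos|]; auto).
  assert (HB : 0 <= K * Dz * (2 / (l0 * l0))) by (apply Rmult_le_pos; [apply Rmult_le_pos|]; lra).
  split. lra.
  intros l Hl i Hi. unfold vsub, wt. pose proof (Rabs_pos (l - l0)) as Hab.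
  destruct (mixingb y i) eqn:Ei.
  - rewrite !local_map_mixing, Rmult_1_l by auto. unfold newton_step.
    replace (z i - sum_lt n (fun k => mixing_ind y k * G i k * (gain n u k z - l * logit (z k))) -
             (z i - sum_lt n (fun k => mixing_ind y k * G i k * (gain n u k z - l0 * logit (z k)))))
      with ((l - l0) * sum_lt n (fun k => mixing_ind y k * G i k * logit (z k))).
    + rewrite Rabs_mult. apply Rle_trans with (Rabs (l - l0) * (INR n * g * Lz)); [|nra].
      apply Rmult_le_compat_l; auto. rewrite Rmult_assoc. apply sum_lt_abs_le. intros k Hk.
      eapply Rle_trans. apply mixing_ind_mul_bound. apply (ld_G_bound HL); auto.
      apply Rmult_le_compat_l; auto.
    + match goal with |- _ = ?a - ?b - (?a - ?c) => transitivity (c - b); [|ring] end.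
      rewrite <- sum_lt_sub, <- sum_lt_scal. apply sum_lt_ext; intros; ring.
  - rewrite !local_map_pure by auto.
    eapply Rle_trans. apply Rmult_le_compat_l. lra. apply logistic_temp_lipschitz; lra.
    pose proof (HDzb i Hi). pose proof (Rabs_pos (gain n u i z)).
    apply Rle_trans with (K * (Dz * (2 / (l0 * l0)) * Rabs (l - l0))).
    { apply Rmult_le_compat_l. lra. apply Rmult_le_compat_r. auto. apply Rmult_le_compat_r; auto. }
    assert (0 <= INR n * g * Lz * Rabs (l - l0)) by (apply Rmult_le_pos; auto). nra.
Qed.

Lemma admissible_exists : exists l1, admissible l1.
Proof.
  pose proof (ld_dd_pos HL) as Hdd. assert (Hd2 : 0 < dd * dd) by nra.
  assert (E1 := small_enough_linear (INR n * g * Lg) (1/4) ltac:(lra)).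
  assert (E2 := small_enough_linear (K * (4 / (dd * dd)) * INR n * Cb) (1/2) ltac:(lra)).
  assert (E3 := small_enough_linear (INR n * g * Cl + K / dd) (rho / 2) ltac:(lra)).
  destruct (small_enough_witness _ (small_enough_and _ _ E1 (small_enough_and _ _ E2 E3)))
    as [l1 [Hl1 [A1 [A2 A3]]]].
  exists l1. split; auto. split; [|split].
  - replace (INR n * g * l1 * Lg) with (INR n * g * Lg * l1) by ring. auto.
  - replace (K * (4 * l1 / (dd * dd)) * INR n * Cb) with (K * (4 / (dd * dd)) * INR n * Cb * l1)
      by (field; lra). auto.
  - rewrite Rmult_comm. auto.
Qed.

Variable l1 : R.
Hypothesis l1_admissible : admissible l1.

Lemma fixpoint_branch_exists :
  exists f : R -> nat -> R, forall l, 0 < l <= l1 -> box (f l) /\ local_map l (f l) = f l.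
Proof.
  assert (Hf : forall l, {z | 0 < l <= l1 -> box z /\ local_map l z = z}).
  { intro l. apply constructive_indefinite_description.
    destruct (classic (0 < l <= l1)) as [Hl|Hl]; [|exists y; tauto].
    assert (Hadm : admissible l) by (apply (admissible_le l1); tauto).
    destruct (contraction_fixpoint_exists n (wt y K) wt_ge1 y rho (local_map l) Hrho
                (local_map_half_contraction l Hadm) y_zero (fun x => local_map_box l x Hadm)) as [z Hz].
    exists z; auto. }
  exists (fun l => proj1_sig (Hf l)). intros l Hl. apply (proj2_sig (Hf l) Hl).
Qed.

Variable f : R -> nat -> R.
Hypothesis f_fixed : forall l, 0 < l <= l1 -> box (f l) /\ local_map l (f l) = f l.

Lemma branch_ND l : 0 < l <= l1 -> ND n u l (f l).
Proof. intros Hl. destruct (f_fixed l Hl). apply fixpoint_ND; auto. lra. Qed.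

Lemma branch_unique l x : 0 < l <= l1 -> ND n u l x -> near n y x (rho / K) -> x = f l.
Proof.
  intros Hl HND Hn. destruct (f_fixed l Hl) as [Hb Ht].
  assert (Hadm : admissible l) by (apply (admissible_le l1); tauto).
  apply (contraction_fixpoint_unique n (wt y K) wt_ge1 y rho (local_map l) Hrho (local_map_half_contraction l Hadm));
    auto.
  - apply in_box_of_near; auto. apply HND.
  - apply ND_fixpoint; auto. lra. apply near_shrink; auto.
Qed.

Lemma branch_near_center l i : 0 < l <= l1 -> Rabs (f l i - y i) <= 2 * (l * (INR n * g * Cl + K / dd)).
Proof.
  intros Hl. destruct (f_fixed l Hl) as [Hb Ht].
  assert (Hadm : admissible l) by (apply (admissible_le l1); tauto).
  assert (Hc : 0 <= INR n * g * Cl + K / dd).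
  { pose proof (pos_INR n). pose proof (ld_Cl_nonneg HL). pose proof (ld_dd_pos HL).
    apply Rplus_le_le_0_compat. apply Rmult_le_pos; [apply Rmult_le_pos|]; auto. apply Rdiv_nonneg; lra. }
  assert (HB : wbd (2 * (l * (INR n * g * Cl + K / dd))) (vsub (f l) y)).
  { apply (wbound_iterate n (wt y K) rho). lra. apply Rmult_le_pos; lra.
    - intros r Hr0 HB. rewrite <- Ht at 1.
      apply (wbound_vsub_trans n (wt y K) wt_ge1 _ _ _ (local_map l y)).
      + apply (local_map_half_contraction l Hadm); auto. apply in_box_center; auto. lra. apply y_zero.
      + apply local_map_center. lra.
    - apply Hb. }
  destruct (Nat.lt_ge_cases i n).
  - apply (wbound_abs n (wt y K) wt_ge1 _ _ HB i H).
  - destruct Hb as [_ A]. rewrite A, y_zero, Rminus_0_r, Rabs_R0 by auto.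
    apply Rmult_le_pos. lra. apply Rmult_le_pos; lra.
Qed.

Lemma branch_tends_to_center e : 0 < e ->
  exists d, 0 < d /\ forall l, 0 < l < d -> l <= l1 -> forall i, Rabs (f l i - y i) < e.
Proof.
  intros He. set (c := INR n * g * Cl + K / dd).
  assert (Hc : 0 <= c).
  { pose proof (pos_INR n). pose proof (ld_Cl_nonneg HL). pose proof (ld_dd_pos HL). unfold c.
    apply Rplus_le_le_0_compat. apply Rmult_le_pos; [apply Rmult_le_pos|]; auto. apply Rdiv_nonneg; lra. }
  exists (e / (2 * c + 1)). split. apply Rdiv_lt_0_compat; lra.
  intros l Hl Hl1 i. eapply Rle_lt_trans. apply branch_near_center. lra.
  apply Rle_lt_trans with (2 * c * (e / (2 * c + 1))).
  - fold c. replace (2 * (l * c)) with (2 * c * l) by ring. apply Rmult_le_compat_l; lra.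
  - apply Rmult_lt_reg_r with (2 * c + 1). lra. unfold Rdiv.
    replace (2 * c * (e * / (2 * c + 1)) * (2 * c + 1)) with (2 * c * e) by (field; lra). nra.
Qed.

Lemma branch_locally_lipschitz l0 : 0 < l0 <= l1 ->
  exists C, 0 <= C /\ forall l, 0 < l <= l1 -> l0 / 2 <= l -> forall i, Rabs (f l i - f l0 i) <= C * Rabs (l - l0).
Proof.
  intros Hl0. destruct (f_fixed l0 Hl0) as [Hb0 Ht0].
  destruct (local_map_temp_lipschitz (f l0) l0 ltac:(lra)) as [C [HC0 HCd]].
  exists (2 * C). split. lra. intros l Hl Hl2 i. destruct (f_fixed l Hl) as [Hb Ht].
  assert (Hadm : admissible l) by (apply (admissible_le l1); tauto).
  assert (HBD : wbd (2 * (C * Rabs (l - l0))) (vsub (f l) (f l0))).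
  { apply (wbound_iterate n (wt y K) (2 * rho)). lra. apply Rmult_le_pos; auto. apply Rabs_pos.
    - intros r Hr0 HB. rewrite <- Ht, <- Ht0 at 1.
      apply (wbound_vsub_trans n (wt y K) wt_ge1 _ _ _ (local_map l (f l0))).
      + apply (local_map_half_contraction l Hadm); auto.
      + apply HCd. auto.
    - apply (in_box_diff n (wt y K) wt_ge1 y); auto. }
  destruct (Nat.lt_ge_cases i n) as [Hin|Hin].
  - pose proof (wbound_abs n (wt y K) wt_ge1 _ _ HBD i Hin). unfold vsub in *. lra.
  - destruct Hb as [_ A]. destruct Hb0 as [_ B]. rewrite A, B, Rminus_0_r, Rabs_R0 by auto.
    apply Rmult_le_pos. lra. apply Rabs_pos.
Qed.

Lemma branch_continuous l0 i : 0 < l0 < l1 -> continuity_pt (fun l => f l i) l0.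
Proof.
  intros Hl0. destruct (branch_locally_lipschitz l0 ltac:(lra)) as [C [HC0 HC]].
  intros e He. exists (Rmin (Rmin (l0 / 2) (l1 - l0)) (e / (C + 1))). split.
  { apply Rmin_glb_lt. apply Rmin_glb_lt; lra. apply Rdiv_lt_0_compat; lra. }
  intros l [_ Hll]. simpl in *. unfold R_dist in *.
  pose proof (Rmin_l (Rmin (l0 / 2) (l1 - l0)) (e / (C + 1))).
  pose proof (Rmin_r (Rmin (l0 / 2) (l1 - l0)) (e / (C + 1))).
  pose proof (Rmin_l (l0 / 2) (l1 - l0)). pose proof (Rmin_r (l0 / 2) (l1 - l0)).
  destruct (Rabs_def2 _ _ Hll).
  eapply Rle_lt_trans. apply HC; lra.
  apply Rle_lt_trans with (C * (e / (C + 1))). apply Rmult_le_compat_l; lra.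
  apply Rmult_lt_reg_r with (C + 1). lra. unfold Rdiv.
  replace (C * (e * / (C + 1)) * (C + 1)) with (C * e) by (field; lra). nra.
Qed.

End NearRegularEquilibrium.

(** * Constructing the local data *)

Lemma regular_hessian_inverse n u y : restricted_hessian_invertible n u y ->
  exists G : nat -> nat -> R,
  (forall i j, (i < n)%nat -> (j < n)%nat -> mixingb y i = true -> mixingb y j = true ->
     sum_lt n (fun k => mixing_ind y k * (G i k * gain2 n u k j y)) = if Nat.eqb i j then 1 else 0) /\
  (forall i j, (i < n)%nat -> (j < n)%nat -> mixingb y i = true -> mixingb y j = true ->
     sum_lt n (fun k => mixing_ind y k * (gain2 n u i k y * G k j)) = if Nat.eqb i j then 1 else 0).
Proof.
  intros [H [G [HH [HHG HGH]]]]. exists G.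
  assert (Hhess : forall i j, (i < n)%nat -> (j < n)%nat -> mixingb y i = true -> mixingb y j = true ->
                    H i j = gain2 n u i j y).
  { intros i j Hi Hj Ei Ej. apply is_hess_gain2; auto. apply HH; auto; apply mixingb_iff; auto. }
  split; intros i j Hi Hj Ei Ej.
  - rewrite <- (HGH i j Hi Hj) by (apply mixingb_iff; auto).
    apply sum_lt_ext; intros k Hk. rewrite mixing_ind_mul.
    unfold mixing_ind. destruct (mixingb y k) eqn:Ek; [rewrite Hhess|]; auto; ring.
  - rewrite <- (HHG i j Hi Hj) by (apply mixingb_iff; auto).
    apply sum_lt_ext; intros k Hk. rewrite mixing_ind_mul.
    unfold mixing_ind. destruct (mixingb y k) eqn:Ek; [rewrite Hhess|]; auto; ring.
Qed.

Lemma quasi_strict_pure_gain n u y i : Delta_set n y -> quasi_strict n u y -> (i < n)%nat -> mixingb y i = false ->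
  (y i = 1 /\ 0 < gain n u i y) \/ (y i = 0 /\ gain n u i y < 0).
Proof.
  intros HD HQ Hi Ei. assert (Ei' : ~ mixing y i) by (rewrite <- mixingb_iff; congruence).
  unfold mixing in Ei'. destruct (HD i) as [A _]. specialize (A Hi).
  destruct (HQ i Hi) as [Q1 Q0]. unfold gain, pdiff.
  destruct (Req_dec (y i) 1) as [E1|E1]. { left. split; auto. specialize (Q1 E1). lra. }
  destruct (Req_dec (y i) 0) as [E0|E0]. { right. split; auto. specialize (Q0 E0). lra. }
  exfalso. apply Ei'. lra.
Qed.

Lemma pure_gap_exists n u y : Delta_set n y -> quasi_strict n u y ->
  exists dd, 0 < dd /\ forall i, (i < n)%nat -> mixingb y i = false -> 2 * dd <= Rabs (gain n u i y).
Proof.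
  intros HD HQ. apply small_enough_witness, small_enough_forall_lt. intros i Hi.
  destruct (mixingb y i) eqn:Ei.
  - exists 1. split. lra. intros. discriminate.
  - apply (small_enough_impl (fun d => d <= Rabs (gain n u i y) / 2)); [|intros; lra].
    apply small_enough_le.
    destruct (quasi_strict_pure_gain n u y i HD HQ Hi Ei) as [[_ A]|[_ A]].
    + rewrite Rabs_right by lra. lra.
    + rewrite Rabs_left by lra. lra.
Qed.

Lemma radius_exists n u y eps dd : 0 < eps -> 0 < dd ->
  exists rho, 0 < rho /\
    (forall k, (k < n)%nat -> forall j, (j < n)%nat -> forall z, near n y z rho ->
       Rabs (gain2 n u k j z - gain2 n u k j y) <= eps) /\
    (forall i, (i < n)%nat -> forall z, near n y z rho -> Rabs (gain n u i z - gain n u i y) <= dd) /\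
    (forall k, (k < n)%nat -> mixingb y k = true -> rho <= Rmin (y k) (1 - y k) / 2).
Proof.
  intros Heps Hdd. apply small_enough_witness.
  apply small_enough_and; [|apply small_enough_and].
  - apply small_enough_forall_lt. intros k Hk. apply small_enough_forall_lt. intros j Hj.
    apply (small_enough_impl _ _ (gain2_cont_at n u k j y eps Heps)). auto.
  - apply small_enough_forall_lt. intros i Hi. apply (small_enough_impl _ _ (gain_cont_at n u i y dd Hdd)). auto.
  - apply small_enough_forall_lt. intros k Hk. destruct (mixingb y k) eqn:Ek.
    + apply (small_enough_impl (fun r => r <= Rmin (y k) (1 - y k) / 2)); auto.
      apply small_enough_le. apply mixingb_iff in Ek. unfold mixing in Ek.
      apply Rmult_lt_0_compat. apply Rmin_glb_lt; lra. lra.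
    + exists 1. split. lra. intros. discriminate.
Qed.

Lemma interval_margin (a rho p : R) : 0 < a < 1 -> rho <= Rmin a (1 - a) / 2 -> Rabs (p - a) <= rho ->
  Rmin a (1 - a) / 2 <= p <= 1 - Rmin a (1 - a) / 2 /\ 0 < Rmin a (1 - a) / 2.
Proof.
  intros Ha Hr Hp. pose proof (Rmin_l a (1 - a)). pose proof (Rmin_r a (1 - a)).
  assert (0 < Rmin a (1 - a)) by (apply Rmin_glb_lt; lra).
  pose proof (Rle_abs (p - a)). pose proof (Rle_abs (- (p - a))). rewrite Rabs_Ropp in H3. lra.
Qed.

(* eps makes the Hessian variation harmless; K then makes the pure-coordinate coupling harmless. *)
Lemma contraction_constants_exist a B : 0 <= a -> 0 <= B ->
  exists eps K, 0 < eps /\ 1 <= K /\ a * (eps + (B + eps) / K) <= 1/4.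
Proof.
  intros Ha HB. set (eps := 1 / (8 * (a + 1))). set (K := 8 * (a * (B + eps)) + 1).
  assert (Heps : 0 < eps) by (unfold eps; apply Rdiv_lt_0_compat; lra).
  assert (Heps2 : a * eps <= 1 / 8).
  { unfold eps. apply Rmult_le_reg_r with (8 * (a + 1)). lra. field_simplify; lra. }
  assert (HK : 1 <= K) by (unfold K; nra).
  assert (HCK : a * ((B + eps) / K) <= 1 / 8).
  { replace (a * ((B + eps) / K)) with ((a * (B + eps)) / K) by (field; lra).
    apply Rmult_le_reg_r with K. lra. unfold Rdiv at 1. rewrite Rmult_assoc, Rinv_l, Rmult_1_r by lra.
    unfold K. nra. }
  exists eps, K. split; auto. split; auto. rewrite Rmult_plus_distr_l. lra.
Qed.

Lemma local_data_exists n u y : NE n u y -> regular_NE n u y ->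
  exists G g eps Cb dd rho Lg Cl K, local_data n u y G g eps Cb dd rho Lg Cl K.
Proof.
  intros HNE [HQ Hinv]. pose proof HNE as [HDy _].
  destruct (regular_hessian_inverse n u y Hinv) as [G [HGH HHG]].
  destruct (exists_abs_bound2 n G) as [g [Hg0 Hg]].
  destruct (exists_abs_bound2 n (fun k j => gain2 n u k j y)) as [B [HB0 HB]].
  assert (Hng : 0 <= INR n * INR n * g) by (pose proof (pos_INR n); apply Rmult_le_pos; [apply Rmult_le_pos|]; auto).
  destruct (contraction_constants_exist _ B Hng HB0) as [eps [K [Heps [HK Hsmall]]]].
  set (Cb := B + eps).
  destruct (pure_gap_exists n u y HDy HQ) as [dd [Hdd Hddp]].
  destruct (radius_exists n u y eps dd Heps Hdd) as [rho [Hrho [Hr1 [Hr2 Hr3]]]].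
  set (c := fun k => Rmin (y k) (1 - y k) / 2).
  assert (Hmarg : forall k, (k < n)%nat -> mixingb y k = true -> forall p, Rabs (p - y k) <= rho ->
           c k <= p <= 1 - c k /\ 0 < c k).
  { intros k Hk Ek p Hp. pose proof (Hr3 k Hk Ek). apply mixingb_iff in Ek. apply (interval_margin (y k) rho p); auto. }
  destruct (exists_abs_bound n (fun k => if mixingb y k then 2 / c k else 0)) as [Lg [HLg0 HLg]].
  destruct (exists_abs_bound n (fun k => logit (y k))) as [Cl [HCl0 HCl]].
  exists G, g, eps, Cb, dd, rho, Lg, Cl, K. constructor; auto; try (unfold Cb; lra).
  - intros z Hz k j Hk Hj. pose proof (Hr1 k Hk j Hj z Hz). pose proof (HB k j Hk Hj).
    replace (gain2 n u k j z) with (gain2 n u k j y + (gain2 n u k j z - gain2 n u k j y)) by ring.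
    eapply Rle_trans. apply Rabs_triang. unfold Cb. lra.
  - intros i Hi Ei z Hz. pose proof (Hr2 i Hi z Hz). pose proof (Hddp i Hi Ei).
    pose proof (Rle_abs (gain n u i z - gain n u i y)). pose proof (Rle_abs (- (gain n u i z - gain n u i y))).
    rewrite Rabs_Ropp in H2.
    destruct (quasi_strict_pure_gain n u y i HDy HQ Hi Ei) as [[A1 A2]|[A1 A2]].
    + left. split; auto. rewrite Rabs_right in H0 by lra. lra.
    + right. split; auto. rewrite Rabs_left in H0 by lra. lra.
  - intros k Hk Ek p Hp. destruct (Hmarg k Hk Ek p Hp). lra.
  - intros k Hk Ek p p' Hp Hp'. destruct (Hmarg k Hk Ek p Hp) as [A1 A2]. destruct (Hmarg k Hk Ek p' Hp') as [B1 _].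
    eapply Rle_trans. apply logit_lipschitz; eauto. apply Rmult_le_compat_r. apply Rabs_pos.
    pose proof (HLg k Hk). rewrite Ek in H. eapply Rle_trans. apply Rle_abs. auto.
Qed.

(** * Away from equilibria, and compactness *)

Lemma ND_gain_pos_bound n u l x i c : 0 < l -> 0 < c -> ND n u l x -> (i < n)%nat ->
  c <= gain n u i x -> 1 - x i <= l / c.
Proof.
  intros Hl Hc HND Hi Hg. apply ND_iff in HND; auto. destruct HND as [_ HE]. rewrite (HE i Hi).
  assert (c / l <= gain n u i x / l) by (unfold Rdiv; apply Rmult_le_compat_r; [apply Rlt_le, Rinv_0_lt_compat|]; lra).
  pose proof (logistic_near_one _ _ H). pose proof (exp_opp_div_le c l Hc Hl). lra.
Qed.

Lemma ND_gain_neg_bound n u l x i c : 0 < l -> 0 < c -> ND n u l x -> (i < n)%nat ->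
  gain n u i x <= - c -> x i <= l / c.
Proof.
  intros Hl Hc HND Hi Hg. apply ND_iff in HND; auto. destruct HND as [_ HE]. rewrite (HE i Hi).
  assert (c / l <= - (gain n u i x / l)).
  { replace (- (gain n u i x / l)) with ((- gain n u i x) / l) by (field; lra).
    unfold Rdiv; apply Rmult_le_compat_r; [apply Rlt_le, Rinv_0_lt_compat|]; lra. }
  pose proof (logistic_near_one _ _ H). pose proof (exp_opp_div_le c l Hc Hl).
  rewrite logistic_opp in H0. lra.
Qed.

Lemma not_NE_neighbourhood n u y : Delta_set n y -> ~ NE n u y ->
  exists r l1, 0 < r /\ 0 < l1 /\ (forall x, near n y x r -> ~ NE n u x) /\
     (forall l, 0 < l <= l1 -> forall x, near n y x r -> ~ ND n u l x).
Proof.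
  intros HD HN. destruct (not_NE_deviation n u y HD HN) as [i [Hi [[Hd Hy]|[Hd Hy]]]].
  - set (d := gain n u i y). assert (Hdpos : 0 < d) by exact Hd.
    destruct (small_enough_witness _ (small_enough_and _ _ (gain_cont_at n u i y (d / 2) ltac:(unfold d; lra))
                                        (small_enough_le ((1 - y i) / 4) ltac:(lra)))) as [r [Hr [Hc Hrl]]].
    assert (Hx : forall x, near n y x r -> d / 2 <= gain n u i x /\ x i <= y i + (1 - y i) / 4).
    { intros x Hx. specialize (Hc x Hx). pose proof (Hx i Hi). fold d in Hc.
      pose proof (Rle_abs (- (gain n u i x - d))). pose proof (Rle_abs (x i - y i)).
      rewrite Rabs_Ropp in H0. lra. }
    exists r, (d * (1 - y i) / 4). repeat split; auto.
    + apply Rdiv_lt_0_compat; [apply Rmult_lt_0_compat|]; lra.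
    + intros x Hxn HNE. destruct (Hx x Hxn). pose proof (NE_gain_pos n u x i HNE Hi ltac:(lra)). lra.
    + intros l Hl x Hxn HND. destruct (Hx x Hxn) as [H1 H2].
      pose proof (ND_gain_pos_bound n u l x i (d / 2) ltac:(lra) ltac:(lra) HND Hi H1).
      assert (l / (d / 2) <= (1 - y i) / 2).
      { apply Rmult_le_reg_l with (d / 2). lra. replace (d / 2 * (l / (d / 2))) with l by (field; lra). nra. }
      lra.
  - set (d := - gain n u i y). assert (Hdpos : 0 < d) by (unfold d; lra).
    destruct (small_enough_witness _ (small_enough_and _ _ (gain_cont_at n u i y (d / 2) ltac:(unfold d; lra))
                                        (small_enough_le (y i / 4) ltac:(lra)))) as [r [Hr [Hc Hrl]]].
    assert (Hx : forall x, near n y x r -> gain n u i x <= - (d / 2) /\ y i - y i / 4 <= x i).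
    { intros x Hx. specialize (Hc x Hx). pose proof (Hx i Hi).
      pose proof (Rle_abs (gain n u i x - gain n u i y)). pose proof (Rle_abs (- (x i - y i))).
      rewrite Rabs_Ropp in H1. unfold d in *. lra. }
    exists r, (d * y i / 4). repeat split; auto.
    + apply Rdiv_lt_0_compat; [apply Rmult_lt_0_compat|]; lra.
    + intros x Hxn HNE. destruct (Hx x Hxn). pose proof (NE_gain_neg n u x i HNE Hi ltac:(lra)). lra.
    + intros l Hl x Hxn HND. destruct (Hx x Hxn) as [H1 H2].
      pose proof (ND_gain_neg_bound n u l x i (d / 2) ltac:(lra) ltac:(lra) HND Hi H1).
      assert (l / (d / 2) <= y i / 2).
      { apply Rmult_le_reg_l with (d / 2). lra. replace (d / 2 * (l / (d / 2))) with l by (field; lra). nra. }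
      lra.
Qed.

Lemma unit_interval_finite_subcover (dl : R -> R) : (forall t, 0 <= t <= 1 -> 0 < dl t) ->
  exists T : list R, (forall t, In t T -> 0 <= t <= 1) /\
    forall s, 0 <= s <= 1 -> exists t, In t T /\ Rabs (s - t) < dl t.
Proof.
  intros Hpos.
  assert (Hc : forall t : R, (exists s, (0 <= t <= 1 /\ Rabs (s - t) < dl t)) -> 0 <= t <= 1)
    by (intros t [s [A _]]; auto).
  set (fam := mkfamily (fun t => 0 <= t <= 1) (fun t s => 0 <= t <= 1 /\ Rabs (s - t) < dl t) Hc).
  destruct (compact_P3 0 1 fam) as [Dm [Hcov Hfin]].
  - split.
    + intros s Hs. exists s. simpl. split; auto.
      replace (s - s) with 0 by ring. rewrite Rabs_R0. apply Hpos; auto.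
    + intros t s [Ht Hs]. set (e := dl t - Rabs (s - t)).
      assert (He : 0 < e) by (unfold e; lra).
      exists (mkposreal e He). intros z Hz. unfold disc in Hz. simpl in *. split; auto.
      replace (z - t) with ((z - s) + (s - t)) by ring.
      eapply Rle_lt_trans. apply Rabs_triang. unfold e in Hz. lra.
  - destruct Hfin as [l Hl]. exists l. split.
    + intros t Ht. apply Hl in Ht. destruct Ht as [A _]. exact A.
    + intros s Hs. destruct (Hcov s Hs) as [t [[A1 A2] A3]]. exists t. split; auto.
      apply Hl. split; auto.
Qed.

Definition lmin (l : list (nat -> R)) (h : (nat -> R) -> R) : R := fold_right (fun y m => Rmin (h y) m) 1 l.

Lemma lmin_pos l h : (forall y, In y l -> 0 < h y) -> 0 < lmin l h.
Proof. induction l; simpl; intros. lra. apply Rmin_glb_lt. apply H; auto. apply IHl; auto. Qed.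

Lemma lmin_le l h y : In y l -> lmin l h <= h y.
Proof.
  induction l; simpl; intros. contradiction.
  destruct H. subst. apply Rmin_l. eapply Rle_trans. apply Rmin_r. auto.
Qed.

Lemma Delta_set_xupd m t y : 0 <= t <= 1 -> Delta_set m y -> Delta_set (S m) (xupd y m t).
Proof.
  intros Ht Hy i. unfold xupd. destruct (Nat.eqb_spec i m).
  - subst. split; intros; auto. lia.
  - destruct (Hy i) as [A B]. split; intros. apply A; lia. apply B; lia.
Qed.

Lemma Delta_set_drop_last m x : Delta_set (S m) x -> Delta_set m (xupd x m 0).
Proof.
  intros Hx i. unfold xupd. destruct (Nat.eqb_spec i m).
  - subst. split; intros. lia. auto.
  - destruct (Hx i) as [B C]. split; intros. apply B; lia. apply C; lia.
Qed.

(* Tube lemma, by induction on the dimension: cover the last coordinate by finitely many intervals,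
   each carrying a finite cover of the remaining coordinates. *)
Lemma Delta_finite_cover m : forall rho : (nat -> R) -> R, (forall y, Delta_set m y -> 0 < rho y) ->
  exists L : list (nat -> R), (forall y, In y L -> Delta_set m y) /\
    forall x, Delta_set m x -> exists y, In y L /\ near m y x (rho y).
Proof.
  induction m; intros rho Hrho.
  - exists ((fun _ => 0) :: nil). split.
    + intros y [<-|[]]. intros i. split; intros; lia || lra.
    + intros x Hx. exists (fun _ => 0). split. left; auto. intros j Hj. lia.
  - assert (HL : forall t, {L : list (nat -> R) | 0 <= t <= 1 ->
        (forall y, In y L -> Delta_set m y) /\
        forall x, Delta_set m x -> exists y, In y L /\ near m y x (rho (xupd y m t) / 2)}).
    { intro t. apply constructive_indefinite_description.
      destruct (classic (0 <= t <= 1)) as [Ht|Ht]; [|exists nil; tauto].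
      destruct (IHm (fun y => rho (xupd y m t) / 2)) as [L HL].
      + intros y Hy. pose proof (Hrho _ (Delta_set_xupd m t y Ht Hy)). lra.
      + exists L. auto. }
    set (Lt := fun t => proj1_sig (HL t)).
    assert (HLt : forall t, 0 <= t <= 1 -> (forall y, In y (Lt t) -> Delta_set m y) /\
        forall x, Delta_set m x -> exists y, In y (Lt t) /\ near m y x (rho (xupd y m t) / 2))
      by (intros t Ht; apply (proj2_sig (HL t) Ht)).
    set (dl := fun t => lmin (Lt t) (fun y => rho (xupd y m t) / 2)).
    destruct (unit_interval_finite_subcover dl) as [T [HT HTc]].
    { intros t Ht. apply lmin_pos. intros y Hy. destruct (HLt t Ht) as [A _].
      pose proof (Hrho _ (Delta_set_xupd m t y Ht (A y Hy))). lra. }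
    exists (flat_map (fun t => map (fun y => xupd y m t) (Lt t)) T). split.
    + intros z Hz. apply in_flat_map in Hz. destruct Hz as [t [Ht Hz]]. apply in_map_iff in Hz.
      destruct Hz as [y [<- Hy]]. apply Delta_set_xupd. apply HT; auto.
      destruct (HLt t (HT t Ht)) as [A _]. auto.
    + intros x Hx. destruct (Hx m) as [A _]. specialize (A ltac:(lia)).
      destruct (HTc (x m) A) as [t [Ht Hdt]].
      destruct (HLt t (HT t Ht)) as [HD B]. destruct (B _ (Delta_set_drop_last m x Hx)) as [y [Hy Hn]].
      exists (xupd y m t). split.
      * apply in_flat_map. exists t. split; auto. apply in_map_iff. exists y. auto.
      * pose proof (Hrho _ (Delta_set_xupd m t y (HT t Ht) (HD y Hy))).
        intros j Hj. destruct (Nat.eq_dec j m).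
        -- subst. rewrite xupd_eq.
           pose proof (lmin_le (Lt t) (fun y => rho (xupd y m t) / 2) y Hy). simpl in *. unfold dl in Hdt. lra.
        -- rewrite xupd_neq by auto. specialize (Hn j ltac:(lia)). rewrite xupd_neq in Hn by auto. lra.
Qed.

Set Implicit Arguments.
Record local_picture n u (y : nat -> R) (r l1 dlt : R) (f : R -> nat -> R) : Prop := {
  lp_r_pos : 0 < r;
  lp_dlt : 0 < dlt <= l1;
  lp_isolated : NE n u y -> forall x, NE n u x -> near n y x r -> x = y;
  lp_branch_ND : NE n u y -> forall l, 0 < l <= l1 -> ND n u l (f l);
  lp_branch_unique : NE n u y -> forall l, 0 < l <= l1 -> forall x, ND n u l x -> near n y x r -> x = f l;
  lp_branch_continuous : NE n u y -> forall l, 0 < l < l1 -> forall i, continuity_pt (fun l => f l i) l;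
  lp_branch_tends : NE n u y -> forall e, 0 < e ->
    exists d, 0 < d /\ forall l, 0 < l < d -> l <= l1 -> forall i, Rabs (f l i - y i) < e;
  lp_branch_close : NE n u y -> forall l, 0 < l < dlt -> forall i, Rabs (f l i - y i) < r / 2;
  lp_no_NE : ~ NE n u y -> forall x, near n y x r -> ~ NE n u x;
  lp_no_ND : ~ NE n u y -> forall l, 0 < l <= l1 -> forall x, near n y x r -> ~ ND n u l x
}.
Unset Implicit Arguments.

Lemma regular_local_picture n u y : NE n u y -> regular_NE n u y ->
  exists r l1 dlt f, local_picture n u y r l1 dlt f.
Proof.
  intros HN HR.
  destruct (local_data_exists n u y HN HR) as [G [g [eps [Cb [dd [rho [Lg [Cl [K HL]]]]]]]]].
  destruct (admissible_exists n u y G g eps Cb dd rho Lg Cl K HL) as [l1 Hl1].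
  destruct (fixpoint_branch_exists n u y G g eps Cb dd rho Lg Cl K HL l1 Hl1) as [f Hf].
  pose proof (ld_K_ge1 HL). pose proof (ld_rho_pos HL). pose proof (proj1 Hl1).
  assert (Hr : 0 < rho / K) by (apply Rdiv_lt_0_compat; lra).
  destruct (branch_tends_to_center n u y G g eps Cb dd rho Lg Cl K HL l1 Hl1 f Hf (rho / K / 2) ltac:(lra))
    as [d [Hd Hd']].
  pose proof (Rmin_l d l1). pose proof (Rmin_r d l1).
  exists (rho / K), l1, (Rmin d l1), f. constructor; auto; try tauto.
  - split. apply Rmin_glb_lt; auto. auto.
  - intros _ x. eapply NE_near_center; eauto.
  - intros _ l. eapply branch_ND; eauto.
  - intros _ l Hl x. eapply branch_unique; eauto.
  - intros _ l Hl i. eapply branch_continuous; eauto.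
  - intros _ e. eapply branch_tends_to_center; eauto.
  - intros _ l Hl i. apply Hd'; lra.
Qed.

Lemma local_picture_exists n u y : regular_game n u -> Delta_set n y ->
  exists r l1 dlt f, local_picture n u y r l1 dlt f.
Proof.
  intros Hreg HD. destruct (classic (NE n u y)) as [HN|HN].
  - apply regular_local_picture; auto.
  - destruct (not_NE_neighbourhood n u y HD HN) as [r [l1 [Hr [Hl1 [A1 A2]]]]].
    exists r, l1, l1, (fun _ _ => 0). constructor; auto; try tauto. lra.
Qed.

Lemma local_pictures n u : regular_game n u ->
  exists (r l1 dlt : (nat -> R) -> R) (F : (nat -> R) -> R -> nat -> R),
    forall y, Delta_set n y -> local_picture n u y (r y) (l1 y) (dlt y) (F y).
Proof.
  intros Hreg.
  assert (Hdat : forall y, {p : R * R * R * (R -> nat -> R) | Delta_set n y ->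
     local_picture n u y (fst (fst (fst p))) (snd (fst (fst p))) (snd (fst p)) (snd p)}).
  { intro y. apply constructive_indefinite_description.
    destruct (classic (Delta_set n y)) as [HD|HD]; [|exists (1, 1, 1, fun _ _ => 0); tauto].
    destruct (local_picture_exists n u y Hreg HD) as [r [l1 [dlt [f Hp]]]].
    exists (r, l1, dlt, f). auto. }
  exists (fun y => fst (fst (fst (proj1_sig (Hdat y))))), (fun y => snd (fst (fst (proj1_sig (Hdat y))))),
         (fun y => snd (fst (proj1_sig (Hdat y)))), (fun y => snd (proj1_sig (Hdat y))).
  intros y HD. apply (proj2_sig (Hdat y) HD).
Qed.

Section Assembly.

Variables (n : nat) (u : list bool -> R) (r l1 dlt : (nat -> R) -> R) (F : (nat -> R) -> R -> nat -> R).
Variable L : list (nat -> R).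
Hypothesis pictures : forall y, Delta_set n y -> local_picture n u y (r y) (l1 y) (dlt y) (F y).
Hypothesis L_Delta : forall y, In y L -> Delta_set n y.
Hypothesis L_covers : forall x, Delta_set n x -> exists y, In y L /\ near n y x (r y).

Lemma NE_in_cover x : NE n u x -> In x L.
Proof.
  intros HN. destruct (L_covers x (proj1 HN)) as [y [Hy Hn]].
  pose proof (pictures y (L_Delta y Hy)) as P.
  destruct (classic (NE n u y)) as [HNy|HNy].
  - rewrite (lp_isolated P HNy HN Hn). auto.
  - exfalso. apply (lp_no_NE P HNy Hn HN).
Qed.

Lemma NE_finite : exists LNE : list (nat -> R), forall x, NE n u x <-> In x LNE.
Proof.
  exists (filter (fun y => if excluded_middle_informative (NE n u y) then true else false) L).
  intro x. rewrite filter_In. destruct (excluded_middle_informative (NE n u x)) as [HN|HN].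
  - split; auto. intros _. split; auto. apply NE_in_cover; auto.
  - split; [tauto|]. intros [_ C]. discriminate.
Qed.

Lemma lmin_dlt_pos : 0 < lmin L dlt.
Proof. apply lmin_pos. intros y Hy. apply (lp_dlt (pictures y (L_Delta y Hy))). Qed.

Lemma lmin_dlt_le xs : NE n u xs -> lmin L dlt <= dlt xs /\ dlt xs <= l1 xs.
Proof.
  intros HN. pose proof (NE_in_cover xs HN). split. apply lmin_le; auto.
  apply (lp_dlt (pictures xs (proj1 HN))).
Qed.

Lemma ND_on_branches lam x : 0 < lam < lmin L dlt ->
  ND n u lam x <-> exists xs, NE n u xs /\ x = F xs lam.
Proof.
  intros Hl. split.
  - intros HND. destruct (L_covers x (proj1 HND)) as [y [Hy Hn]].
    pose proof (pictures y (L_Delta y Hy)) as P. pose proof (lmin_le L dlt y Hy). pose proof (lp_dlt P).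
    destruct (classic (NE n u y)) as [HNy|HNy].
    + exists y. split; auto. apply (lp_branch_unique P); auto. lra.
    + exfalso. apply (lp_no_ND P HNy (l := lam) ltac:(lra) Hn HND).
  - intros [xs [HN ->]]. pose proof (lmin_dlt_le xs HN).
    apply (lp_branch_ND (pictures xs (proj1 HN))); auto. lra.
Qed.

(* The two branches stay within half of their own radius, so the larger radius separates them. *)
Lemma branches_disjoint lam xs ys : 0 < lam < lmin L dlt -> NE n u xs -> NE n u ys ->
  xs <> ys -> F xs lam <> F ys lam.
Proof.
  intros Hl HNx HNy Hne Heq.
  pose proof (pictures xs (proj1 HNx)) as Px. pose proof (pictures ys (proj1 HNy)) as Py.
  pose proof (lmin_dlt_le xs HNx). pose proof (lmin_dlt_le ys HNy).
  assert (Ex : forall i, Rabs (F xs lam i - xs i) < r xs / 2) by (intro i; apply (lp_branch_close Px); auto; lra).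
  assert (Ey : forall i, Rabs (F xs lam i - ys i) < r ys / 2)
    by (intro i; rewrite Heq; apply (lp_branch_close Py); auto; lra).
  assert (Hd : forall j, Rabs (xs j - ys j) < r xs / 2 + r ys / 2).
  { intro j. specialize (Ex j). specialize (Ey j).
    replace (xs j - ys j) with ((F xs lam j - ys j) - (F xs lam j - xs j)) by ring.
    eapply Rle_lt_trans. apply Rabs_triang. rewrite Rabs_Ropp. lra. }
  apply Hne. destruct (Rle_dec (r xs) (r ys)).
  - apply (lp_isolated Py HNy HNx). intros j Hj. specialize (Hd j). lra.
  - symmetry. apply (lp_isolated Px HNx HNy). intros j Hj. specialize (Hd j).
    rewrite <- Rabs_Ropp. replace (- (ys j - xs j)) with (xs j - ys j) by ring. lra.
Qed.

End Assembly.

Theorem theorem3 (n : nat) (ui : nat -> list bool -> R) (u : list bool -> R)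
  (Hpot : is_potential n ui u) (Hreg : regular_game n u) :
  (exists L : list (nat -> R), forall x, NE n u x <-> In x L) /\
  exists lam0 : R, 0 < lam0 /\
  exists xl : (nat -> R) -> R -> (nat -> R),
    (forall xs, NE n u xs -> forall lam, 0 < lam < lam0 -> Delta_set n (xl xs lam)) /\
    (forall xs, NE n u xs -> forall i : nat, forall lam, 0 < lam < lam0 ->
        continuity_pt (fun l => xl xs l i) lam) /\
    (forall lam, 0 < lam < lam0 -> forall xs ys, NE n u xs -> NE n u ys ->
        xs <> ys -> xl xs lam <> xl ys lam) /\
    (forall lam, 0 < lam < lam0 -> forall x,
        ND n u lam x <-> exists xs, NE n u xs /\ x = xl xs lam) /\
    (forall xs, NE n u xs -> forall i : nat, forall eps, 0 < eps ->
        exists delta, 0 < delta /\ forall lam, 0 < lam < delta -> lam < lam0 ->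
          Rabs (xl xs lam i - xs i) < eps).
Proof.
  destruct (local_pictures n u Hreg) as [r [l1 [dlt [F HP]]]].
  destruct (Delta_finite_cover n r) as [L [HLD HLc]].
  { intros y HD. apply (lp_r_pos (HP y HD)). }
  split. { eapply NE_finite; eauto. }
  exists (lmin L dlt). split. { eapply lmin_dlt_pos; eauto. }
  exists F. split; [|split; [|split; [|split]]].
  - intros xs HN lam Hl.
    assert (HND : ND n u lam (F xs lam)) by (eapply ND_on_branches; eauto). apply HND.
  - intros xs HN i lam Hl. pose proof (lmin_dlt_le n u r l1 dlt F L HP HLD HLc xs HN).
    apply (lp_branch_continuous (HP xs (proj1 HN))); auto. lra.
  - intros lam Hl xs ys. eapply branches_disjoint; eauto.
  - intros lam Hl x. eapply ND_on_branches; eauto.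
  - intros xs HN i e He. pose proof (lmin_dlt_le n u r l1 dlt F L HP HLD HLc xs HN).
    destruct (lp_branch_tends (HP xs (proj1 HN)) HN He) as [d [Hd Hd']].
    exists d. split; auto. intros lam Hl Hl0. apply Hd'; auto. lra.
Qed.
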